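(* In iTML, suppose $T :: \sigma,\nu,M \Rightarrow \nu',S$ and $(\mu,R), (\mu',R') \sqsubseteq (\nu',S)$. Then $\mathsf{bwd}_T(\mu \sqcup \mu', R \sqcup R') = \mathsf{bwd}_T(\mu,R) \sqcup \mathsf{bwd}_T(\mu',R')$, where $\mathsf{bwd}_T : \mathrm{Prefix}(\nu',S) \to \mathrm{Prefix}(\sigma,\nu,M,T)$ sends $(\mu_1,R_1)$ to the unique $(\rho,\mu_0,N,U)$ with $\mu_1,R_1,T \searrow \rho,\mu_0,N,U$.
   Context: Partial syntax of iTML ($\Box$ a hole). Expressions $e ::= x \mid () \mid \mathsf{inl}\,e \mid \mathsf{inr}\,e \mid (e_1,e_2) \mid \mathsf{fst}\,e \mid \mathsf{snd}\,e \mid \mathsf{fun}\,f(x).M \mid \Box$. Computations $M ::= \mathsf{return}\,e \mid \mathsf{let}\,x = M_1\,\mathsf{in}\,M_2 \mid e_1\,e_2 \mid \mathsf{case}\,e\,\mathsf{of}\,\{\mathsf{inl}\,x \to M_1; \mathsf{inr}\,y \to M_2\} \mid \mathsf{raise}\,e \mid \mathsf{try}\,M_1\,\mathsf{with}\,x \to M_2 \mid \mathsf{ref}\,e \mid e_1 := e_2 \mid !e \mid \Box$. Values $v ::= () \mid \mathsf{inl}\,v \mid \mathsf{inr}\,v \mid (v_1,v_2) \mid \langle\rho,\mathsf{fun}\,f(x).M\rangle \mid \ell \mid \Box$. Environments $\rho$ / stores $\mu$: finitely supported maps from variables / locations to values, regarded as total with value $\Box$ off their domain; $\rho[x\mapsto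 v]$ extends, $\mu[\ell\mapsto v]$ updates; $\Box$ also denotes the everywhere-$\Box$ environment, $\Box[x\mapsto v]$ the environment that is $\Box$ except at $x$, and $[\ell\mapsto v]$ the store that is $\Box$ except at $\ell$. Outcomes $k ::= \mathsf{val}\mid\mathsf{exn}$; results $R ::= k\,v$. Traces $T ::= \mathsf{return}\,e \mid \mathsf{let_F}(T) \mid \mathsf{let_S}(T_1,x.T_2) \mid \mathsf{app}(e_1,e_2,f.x.T) \mid \mathsf{caseL}(e,x.T,y) \mid \mathsf{caseR}(e,x,y.T) \mid \mathsf{raise}\,e \mid \mathsf{try_S}(T) \mid \mathsf{try_F}(T_1,x.T_2) \mid \mathsf{ref}_\ell\,e \mid e_1:=_\ell e_2 \mid !_\ell\,e \mid \Box^k_{\mathcal{L}}$ ($\mathcal{L}$ a finite set of locations). $\mathsf{writes}(T)$: $\mathcal{L}$ for $\Box^k_{\mathcal{L}}$; $\emptyset$ for $\mathsf{return}\,e,\mathsf{raise}\,e,!_\ell e$; $\{\ell\}$ for $\mathsf{ref}_\ell e$, $e_1:=_\ell e_2$; union of both subtraces for $\mathsf{let_S}$, $\mathsf{try_F}$; that of the unique subtrace for $\mathsf{let_F},\mathsf{try_S},\mathsf{app},\mathsf{caseL},\mathsf{caseR}$. $\mathsf{outcome}(T)$: $k$ for $\Box^k_{\mathcal{L}}$; $\mathsf{val}$ for $\mathsf{return},\mathsf{try_S},\mathsf{ref}_\ell,:=_\ell,!_\ell$; $\mathsf{exn}$ for $\mathsf{let_F},\mathsf{raise}$; outcome of $T_2$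 for $\mathsf{let_S}(T_1,x.T_2),\mathsf{try_F}(T_1,x.T_2)$; outcome of the subtrace for $\mathsf{app},\mathsf{caseL},\mathsf{caseR}$. Order $\sqsubseteq$: on expressions, computations, values the least order with $\Box\sqsubseteq t$ closed under constructors componentwise; $k\,v\sqsubseteq k\,v'$ iff $v\sqsubseteq v'$ (same $k$); pointwise on environments and stores; on traces the least order containing $\Box^k_{\mathcal{L}}\sqsubseteq T$ whenever $\mathsf{writes}(T)=\mathcal{L}$ and $\mathsf{outcome}(T)=k$, closed under trace constructors componentwise; componentwise on tuples. $\mathrm{Prefix}(t)=\{t'\mid t'\sqsubseteq t\}$, a lattice with join $\sqcup$. Store erasure: $\mu\triangleleft\mathcal{L}$ is $\mu$ with every $\ell\in\mathcal{L}$ mapped to $\Box$. Evaluation (hole-free): $\rho,x\Rightarrow\rho(x)$; $()\Rightarrow()$; $\mathsf{fun}\,f(x).M\Rightarrow\langle\rho,\mathsf{fun}\,f(x).M\rangle$; $\mathsf{inl},\mathsf{inr}$, pairs componentwise; $\mathsf{fst},\mathsf{snd}$ project. $\mathsf{return}\,e::\rho,\mu,\mathsf{return}\,e\Rightarrow\mu,\mathsf{val}\,v$ if $\rho,e\Rightarrow v$; $\mathsf{app}(e_1,e_2,f.x.T)::\rho,\mu,e_1\,e_2\Rightarrow\mu',R$ if $\rho,e_1\Rightarrow v_1=\langle\rho',\mathsf{fun}\,f(x).M\rangle$, $\rho,e_2\Rightarrow v_2$, $T::\rho'[f\mapsto v_1][x\mapsto v_2],\mu,M\Rightarrow\mu',R$;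 $\mathsf{raise}\,e::\rho,\mu,\mathsf{raise}\,e\Rightarrow\mu,\mathsf{exn}\,v$ if $\rho,e\Rightarrow v$; $\mathsf{ref}_\ell\,e::\rho,\mu,\mathsf{ref}\,e\Rightarrow\mu[\ell\mapsto v],\mathsf{val}\,\ell$ if $\rho,e\Rightarrow v$, $\ell\notin\mathrm{dom}\,\mu$; $e_1:=_\ell e_2::\rho,\mu,e_1:=e_2\Rightarrow\mu[\ell\mapsto v],\mathsf{val}\,()$ if $\rho,e_1\Rightarrow\ell$, $\rho,e_2\Rightarrow v$; $!_\ell e::\rho,\mu,!e\Rightarrow\mu,\mathsf{val}\,\mu(\ell)$ if $\rho,e\Rightarrow\ell\in\mathrm{dom}\,\mu$; $\mathsf{let_S}(T_1,x.T_2)::\rho,\mu,\mathsf{let}\,x=M_1\,\mathsf{in}\,M_2\Rightarrow\mu'',R$ if $T_1::\rho,\mu,M_1\Rightarrow\mu',\mathsf{val}\,v$ and $T_2::\rho[x\mapsto v],\mu',M_2\Rightarrow\mu'',R$; $\mathsf{let_F}(T)::\ldots\Rightarrow\mu',\mathsf{exn}\,v$ if $T::\rho,\mu,M_1\Rightarrow\mu',\mathsf{exn}\,v$; $\mathsf{try_F}(T_1,x.T_2)::\rho,\mu,\mathsf{try}\,M_1\,\mathsf{with}\,x\to M_2\Rightarrow\mu'',R$ if $T_1::\rho,\mu,M_1\Rightarrow\mu',\mathsf{exn}\,v$, $T_2::\rho[x\mapsto v],\mu',M_2\Rightarrow\mu'',R$; $\mathsf{try_S}(T_1)::\ldots\Rightarrow\mu',\mathsf{val}\,v$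 if $T_1::\rho,\mu,M_1\Rightarrow\mu',\mathsf{val}\,v$; $\mathsf{caseL}(e,x.T,y)::\rho,\mu,\mathsf{case}\,e\,\mathsf{of}\{\mathsf{inl}\,x\to M_1;\mathsf{inr}\,y\to M_2\}\Rightarrow\mu',R$ if $\rho,e\Rightarrow\mathsf{inl}\,v$, $T::\rho[x\mapsto v],\mu,M_1\Rightarrow\mu',R$; symmetrically $\mathsf{caseR}(e,x,y.T)$. Expression backward slicing $v,e\searrow\rho,e'$ (first rule used whenever it applies): $\Box,e\searrow\Box,\Box$; for $v\neq\Box$, $v,x\searrow\Box[x\mapsto v],x$; $\langle\rho,\mathsf{fun}\,f(x).M\rangle,\mathsf{fun}\,f(x).M'\searrow\rho,\mathsf{fun}\,f(x).M$; $(),()\searrow\Box,()$; $\mathsf{inl}\,v,\mathsf{inl}\,e\searrow\rho,\mathsf{inl}\,e'$ and $\mathsf{inr}\,v,\mathsf{inr}\,e\searrow\rho,\mathsf{inr}\,e'$ if $v,e\searrow\rho,e'$; $(v_1,v_2),(e_1,e_2)\searrow\rho_1\sqcup\rho_2,(e_1',e_2')$ if $v_i,e_i\searrow\rho_i,e_i'$; $v,\mathsf{fst}\,e\searrow\rho,\mathsf{fst}\,e'$ if $(v,\Box),e\searrow\rho,e'$; $v,\mathsf{snd}\,e\searrow\rho,\mathsf{snd}\,e'$ if $(\Box,v),e\searrow\rho,e'$. Computation backward slicing $\mu,R,T\searrow\rho,\mu',M,U$ (B-Slice$\Box$ is applied whenever it applies): (B-Slice$\Box$) if $\mu\triangleleft\mathsf{writes}(T)=\mu$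 then $\mu,k\,\Box,T\searrow\Box,\mu,\Box,\Box^k_{\mathsf{writes}(T)}$. (B-Ret) $v,e\searrow\rho,e'$ ⟹ $\mu,\mathsf{val}\,v,\mathsf{return}\,e\searrow\rho,\mu,\mathsf{return}\,e',\mathsf{return}\,e'$. (B-Let) $\mu,R,T_2\searrow\rho_2[x\mapsto v],\mu',M_2,U_2$, $\mu',\mathsf{val}\,v,T_1\searrow\rho_1,\mu'',M_1,U_1$ ⟹ $\mu,R,\mathsf{let_S}(T_1,x.T_2)\searrow\rho_1\sqcup\rho_2,\mu'',\mathsf{let}\,x=M_1\,\mathsf{in}\,M_2,\mathsf{let_S}(U_1,x.U_2)$. (B-LetFail) $\mu,\mathsf{exn}\,v,T_1\searrow\rho,\mu',M_1,U_1$ ⟹ $\mu,\mathsf{exn}\,v,\mathsf{let_F}(T_1)\searrow\rho,\mu',\mathsf{let}\,x=M_1\,\mathsf{in}\,\Box,\mathsf{let_F}(U_1)$. (B-CaseL) $\mu,R,T\searrow\rho[x\mapsto v],\mu',M_1,U$, $\mathsf{inl}\,v,e\searrow\rho',e'$ ⟹ $\mu,R,\mathsf{caseL}(e,x.T,y)\searrow\rho\sqcup\rho',\mu',\mathsf{case}\,e'\,\mathsf{of}\{\mathsf{inl}\,x\to M_1;\mathsf{inr}\,y\to\Box\},\mathsf{caseL}(e',x.U,y)$. (B-CaseR) $\mu,R,T\searrow\rho[y\mapsto v],\mu',M_2,U$, $\mathsf{inr}\,v,e\searrow\rho',e'$ ⟹ $\mu,R,\mathsf{caseR}(e,x,y.T)\searrow\rho\sqcup\rho',\mu',\mathsf{case}\,e'\,\mathsf{of}\{\mathsf{inl}\,x\to\Box;\mathsf{inr}\,y\to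 M_2\},\mathsf{caseR}(e',x,y.U)$. (B-App) $\mu,R,T\searrow\rho[f\mapsto v_1][x\mapsto v_2],\mu',M,U$, $v_2,e_2\searrow\rho_2,e_2'$, $v_1\sqcup\langle\rho,\mathsf{fun}\,f(x).M\rangle,e_1\searrow\rho_1,e_1'$ ⟹ $\mu,R,\mathsf{app}(e_1,e_2,f.x.T)\searrow\rho_1\sqcup\rho_2,\mu',e_1'\,e_2',\mathsf{app}(e_1',e_2',f.x.U)$. (B-Raise) $v,e\searrow\rho,e'$ ⟹ $\mu,\mathsf{exn}\,v,\mathsf{raise}\,e\searrow\rho,\mu,\mathsf{raise}\,e',\mathsf{raise}\,e'$. (B-TryFail) $\mu,R,T_2\searrow\rho_1[x\mapsto v],\mu',M_2,U_2$, $\mu',\mathsf{exn}\,v,T_1\searrow\rho_2,\mu'',M_1,U_1$ ⟹ $\mu,R,\mathsf{try_F}(T_1,x.T_2)\searrow\rho_1\sqcup\rho_2,\mu'',\mathsf{try}\,M_1\,\mathsf{with}\,x\to M_2,\mathsf{try_F}(U_1,x.U_2)$. (B-Try) $\mu,\mathsf{val}\,v,T_1\searrow\rho,\mu',M_1,U_1$ ⟹ $\mu,\mathsf{val}\,v,\mathsf{try_S}(T_1)\searrow\rho,\mu',\mathsf{try}\,M_1\,\mathsf{with}\,x\to\Box,\mathsf{try_S}(U_1)$. (B-Ref) $\mu(\ell),e\searrow\rho,e'$ ⟹ $\mu,\mathsf{val}\,v,\mathsf{ref}_\ell\,e\searrow\rho,\mu[\ell\mapsto\Box],\mathsf{ref}\,e',\mathsf{ref}_\ell\,e'$.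 (B-Assign) $\mu(\ell),e_2\searrow\rho_2,e_2'$, $\ell,e_1\searrow\rho_1,e_1'$ ⟹ $\mu,\mathsf{val}\,v,e_1:=_\ell e_2\searrow\rho_1\sqcup\rho_2,\mu[\ell\mapsto\Box],e_1':=e_2',e_1':=_\ell e_2'$. (B-Deref) $\ell,e\searrow\rho,e'$ ⟹ $\mu,\mathsf{val}\,v,!_\ell e\searrow\rho,\mu\sqcup[\ell\mapsto v],!e',!_\ell e'$. For $T::\sigma,\nu,M\Rightarrow\nu',S$, backward slicing along $T$ is a total deterministic function from $\mathrm{Prefix}(\nu',S)$ into $\mathrm{Prefix}(\sigma,\nu,M,T)$, so $\mathsf{bwd}_T$ is well defined. *)

From mathcomp Require Import all_boot finmap.

Set Implicit Arguments.
Unset Strict Implicit.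
Unset Printing Implicit Defensive.

Local Open Scope fset_scope.

Definition var := nat.
Definition loc := nat.

Inductive iexpr : Type :=
| EVar  : var -> iexpr
| EUnit : iexpr
| EInl  : iexpr -> iexpr
| EInr  : iexpr -> iexpr
| EPair : iexpr -> iexpr -> iexpr
| EFst  : iexpr -> iexpr
| ESnd  : iexpr -> iexpr
| EFun  : var -> var -> icomp -> iexpr          (* fun f(x).M *)
| EHole : iexpr
with icomp : Type :=
| CRet    : iexpr -> icomp
| CLet    : var -> icomp -> icomp -> icomp
| CApp    : iexpr -> iexpr -> icomp
| CCase   : iexpr -> var -> icomp -> var -> icomp -> icomp
| CRaise  : iexpr -> icomp
| CTry    : icomp -> var -> icomp -> icomp
| CRef    : iexpr -> icomp
| CAssign : iexpr -> iexpr -> icomp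
| CDeref  : iexpr -> icomp
| CHole   : icomp.

(* Values; an environment is a map var -> value, total with value VHole
   off its domain. *)
Inductive ivalue : Type :=
| VUnit : ivalue
| VInl  : ivalue -> ivalue
| VInr  : ivalue -> ivalue
| VPair : ivalue -> ivalue -> ivalue
| VClo  : (var -> ivalue) -> var -> var -> icomp -> ivalue
| VLoc  : loc -> ivalue
| VHole : ivalue.

Definition env := var -> ivalue.
Definition store := loc -> ivalue.

Inductive outcome : Type := Val | Exn.

Inductive result : Type := Res : outcome -> ivalue -> result.

Inductive itrace : Type :=
| TRet    : iexpr -> itrace
| TLetF   : itrace -> itrace
| TLetS   : itrace -> var -> itrace -> itrace
| TApp    : iexpr -> iexpr -> var -> var -> itrace -> itrace
| TCaseL  : iexpr -> var -> itrace -> var -> itrace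
| TCaseR  : iexpr -> var -> var -> itrace -> itrace
| TRaise  : iexpr -> itrace
| TTryS   : itrace -> itrace
| TTryF   : itrace -> var -> itrace -> itrace
| TRef    : loc -> iexpr -> itrace
| TAssign : loc -> iexpr -> iexpr -> itrace
| TDeref  : loc -> iexpr -> itrace
| THole   : outcome -> {fset loc} -> itrace.

Definition env_hole : env := fun _ => VHole.
Definition store_hole : store := fun _ => VHole.

Definition upd (r : var -> ivalue) (x : nat) (v : ivalue) : var -> ivalue :=
  fun y => if y == x then v else r y.

Definition in_dom (m : store) (l : loc) : Prop := m l <> VHole.

Definition erase (m : store) (L : {fset loc}) : store :=
  fun l => if l \in L then VHole else m l.

Fixpoint writes (T : itrace) : {fset loc} :=
  match T with
  | THole _ L => L
  | TRet _ | TRaise _ | TDeref _ _ => fset0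
  | TRef l _ | TAssign l _ _ => [fset l]
  | TLetS T1 _ T2 | TTryF T1 _ T2 => writes T1 `|` writes T2
  | TLetF T | TTryS T | TApp _ _ _ _ T | TCaseL _ _ T _ | TCaseR _ _ _ T => writes T
  end.

Fixpoint toutcome (T : itrace) : outcome :=
  match T with
  | THole k _ => k
  | TRet _ | TTryS _ | TRef _ _ | TAssign _ _ _ | TDeref _ _ => Val
  | TLetF _ | TRaise _ => Exn
  | TLetS _ _ T2 | TTryF _ _ T2 => toutcome T2
  | TApp _ _ _ _ T | TCaseL _ _ T _ | TCaseR _ _ _ T => toutcome T
  end.

Inductive ele : iexpr -> iexpr -> Prop :=
| ele_hole e : ele EHole e
| ele_var x : ele (EVar x) (EVar x)
| ele_unit : ele EUnit EUnit
| ele_inl e e' : ele e e' -> ele (EInl e) (EInl e')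
| ele_inr e e' : ele e e' -> ele (EInr e) (EInr e')
| ele_pair e1 e2 e1' e2' : ele e1 e1' -> ele e2 e2' -> ele (EPair e1 e2) (EPair e1' e2')
| ele_fst e e' : ele e e' -> ele (EFst e) (EFst e')
| ele_snd e e' : ele e e' -> ele (ESnd e) (ESnd e')
| ele_fun f x M M' : cle M M' -> ele (EFun f x M) (EFun f x M')
with cle : icomp -> icomp -> Prop :=
| cle_hole M : cle CHole M
| cle_ret e e' : ele e e' -> cle (CRet e) (CRet e')
| cle_let x M1 M2 M1' M2' : cle M1 M1' -> cle M2 M2' -> cle (CLet x M1 M2) (CLet x M1' M2')
| cle_app e1 e2 e1' e2' : ele e1 e1' -> ele e2 e2' -> cle (CApp e1 e2) (CApp e1' e2')
| cle_case e x M1 y M2 e' M1' M2' : ele e e' -> cle M1 M1' -> cle M2 M2' ->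
    cle (CCase e x M1 y M2) (CCase e' x M1' y M2')
| cle_raise e e' : ele e e' -> cle (CRaise e) (CRaise e')
| cle_try M1 x M2 M1' M2' : cle M1 M1' -> cle M2 M2' -> cle (CTry M1 x M2) (CTry M1' x M2')
| cle_ref e e' : ele e e' -> cle (CRef e) (CRef e')
| cle_assign e1 e2 e1' e2' : ele e1 e1' -> ele e2 e2' -> cle (CAssign e1 e2) (CAssign e1' e2')
| cle_deref e e' : ele e e' -> cle (CDeref e) (CDeref e').

Inductive vle : ivalue -> ivalue -> Prop :=
| vle_hole v : vle VHole v
| vle_unit : vle VUnit VUnit
| vle_inl v v' : vle v v' -> vle (VInl v) (VInl v')
| vle_inr v v' : vle v v' -> vle (VInr v) (VInr v')
| vle_pair v1 v2 v1' v2' : vle v1 v1' -> vle v2 v2' -> vle (VPair v1 v2) (VPair v1' v2')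
| vle_clo r r' f x M M' : (forall y, vle (r y) (r' y)) -> cle M M' ->
    vle (VClo r f x M) (VClo r' f x M')
| vle_loc l : vle (VLoc l) (VLoc l).

Definition envle (r r' : env) : Prop := forall y, vle (r y) (r' y).
Definition stle (m m' : store) : Prop := forall l, vle (m l) (m' l).

Definition rle (R R' : result) : Prop :=
  match R, R' with Res k v, Res k' v' => k = k' /\ vle v v' end.

Inductive tle : itrace -> itrace -> Prop :=
| tle_hole T : tle (THole (toutcome T) (writes T)) T
| tle_ret e e' : ele e e' -> tle (TRet e) (TRet e')
| tle_letF T T' : tle T T' -> tle (TLetF T) (TLetF T')
| tle_letS T1 x T2 T1' T2' : tle T1 T1' -> tle T2 T2' -> tle (TLetS T1 x T2) (TLetS T1' x T2')
| tle_app e1 e2 f x T e1' e2' T' : ele e1 e1' -> ele e2 e2' -> tle T T' ->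
    tle (TApp e1 e2 f x T) (TApp e1' e2' f x T')
| tle_caseL e x T y e' T' : ele e e' -> tle T T' -> tle (TCaseL e x T y) (TCaseL e' x T' y)
| tle_caseR e x y T e' T' : ele e e' -> tle T T' -> tle (TCaseR e x y T) (TCaseR e' x y T')
| tle_raise e e' : ele e e' -> tle (TRaise e) (TRaise e')
| tle_tryS T T' : tle T T' -> tle (TTryS T) (TTryS T')
| tle_tryF T1 x T2 T1' T2' : tle T1 T1' -> tle T2 T2' -> tle (TTryF T1 x T2) (TTryF T1' x T2')
| tle_ref l e e' : ele e e' -> tle (TRef l e) (TRef l e')
| tle_assign l e1 e2 e1' e2' : ele e1 e1' -> ele e2 e2' ->
    tle (TAssign l e1 e2) (TAssign l e1' e2')
| tle_deref l e e' : ele e e' -> tle (TDeref l e) (TDeref l e').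

(* ---------------- Joins (meaningful on compatible arguments) ---------------- *)

Fixpoint ejoin (e1 e2 : iexpr) {struct e1} : iexpr :=
  match e1, e2 with
  | EHole, _ => e2
  | _, EHole => e1
  | EInl a, EInl b => EInl (ejoin a b)
  | EInr a, EInr b => EInr (ejoin a b)
  | EPair a1 a2, EPair b1 b2 => EPair (ejoin a1 b1) (ejoin a2 b2)
  | EFst a, EFst b => EFst (ejoin a b)
  | ESnd a, ESnd b => ESnd (ejoin a b)
  | EFun f x M, EFun _ _ M' => EFun f x (cjoin M M')
  | _, _ => e1
  end
with cjoin (M1 M2 : icomp) {struct M1} : icomp :=
  match M1, M2 with
  | CHole, _ => M2
  | _, CHole => M1
  | CRet a, CRet b => CRet (ejoin a b)
  | CLet x A1 A2, CLet _ B1 B2 => CLet x (cjoin A1 B1) (cjoin A2 B2)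
  | CApp a1 a2, CApp b1 b2 => CApp (ejoin a1 b1) (ejoin a2 b2)
  | CCase a x A1 y A2, CCase b _ B1 _ B2 => CCase (ejoin a b) x (cjoin A1 B1) y (cjoin A2 B2)
  | CRaise a, CRaise b => CRaise (ejoin a b)
  | CTry A1 x A2, CTry B1 _ B2 => CTry (cjoin A1 B1) x (cjoin A2 B2)
  | CRef a, CRef b => CRef (ejoin a b)
  | CAssign a1 a2, CAssign b1 b2 => CAssign (ejoin a1 b1) (ejoin a2 b2)
  | CDeref a, CDeref b => CDeref (ejoin a b)
  | _, _ => M1
  end.

Fixpoint vjoin (v1 v2 : ivalue) {struct v1} : ivalue :=
  match v1, v2 with
  | VHole, _ => v2
  | _, VHole => v1
  | VInl a, VInl b => VInl (vjoin a b)
  | VInr a, VInr b => VInr (vjoin a b)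
  | VPair a1 a2, VPair b1 b2 => VPair (vjoin a1 b1) (vjoin a2 b2)
  | VClo r f x M, VClo r' _ _ M' => VClo (fun y => vjoin (r y) (r' y)) f x (cjoin M M')
  | _, _ => v1
  end.

Definition envjoin (r1 r2 : env) : env := fun y => vjoin (r1 y) (r2 y).
Definition stjoin (m1 m2 : store) : store := fun l => vjoin (m1 l) (m2 l).

Definition rjoin (R1 R2 : result) : result :=
  match R1, R2 with Res k v1, Res _ v2 => Res k (vjoin v1 v2) end.

Fixpoint tjoin (T1 T2 : itrace) {struct T1} : itrace :=
  match T1, T2 with
  | THole _ _, _ => T2
  | _, THole _ _ => T1
  | TRet a, TRet b => TRet (ejoin a b)
  | TLetF A, TLetF B => TLetF (tjoin A B)
  | TLetS A1 x A2, TLetS B1 _ B2 => TLetS (tjoin A1 B1) x (tjoin A2 B2)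
  | TApp a1 a2 f x A, TApp b1 b2 _ _ B => TApp (ejoin a1 b1) (ejoin a2 b2) f x (tjoin A B)
  | TCaseL a x A y, TCaseL b _ B _ => TCaseL (ejoin a b) x (tjoin A B) y
  | TCaseR a x y A, TCaseR b _ _ B => TCaseR (ejoin a b) x y (tjoin A B)
  | TRaise a, TRaise b => TRaise (ejoin a b)
  | TTryS A, TTryS B => TTryS (tjoin A B)
  | TTryF A1 x A2, TTryF B1 _ B2 => TTryF (tjoin A1 B1) x (tjoin A2 B2)
  | TRef l a, TRef _ b => TRef l (ejoin a b)
  | TAssign l a1 a2, TAssign _ b1 b2 => TAssign l (ejoin a1 b1) (ejoin a2 b2)
  | TDeref l a, TDeref _ b => TDeref l (ejoin a b)
  | _, _ => T1
  end.

Inductive eeval : env -> iexpr -> ivalue -> Prop :=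
| ev_var r x : eeval r (EVar x) (r x)
| ev_unit r : eeval r EUnit VUnit
| ev_fun r f x M : eeval r (EFun f x M) (VClo r f x M)
| ev_inl r e v : eeval r e v -> eeval r (EInl e) (VInl v)
| ev_inr r e v : eeval r e v -> eeval r (EInr e) (VInr v)
| ev_pair r e1 e2 v1 v2 : eeval r e1 v1 -> eeval r e2 v2 -> eeval r (EPair e1 e2) (VPair v1 v2)
| ev_fst r e v1 v2 : eeval r e (VPair v1 v2) -> eeval r (EFst e) v1
| ev_snd r e v1 v2 : eeval r e (VPair v1 v2) -> eeval r (ESnd e) v2.

Inductive ceval : itrace -> env -> store -> icomp -> store -> result -> Prop :=
| cv_ret r m e v : eeval r e v -> ceval (TRet e) r m (CRet e) m (Res Val v)
| cv_app r m e1 e2 r' f x M v2 T m' R :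
    eeval r e1 (VClo r' f x M) -> eeval r e2 v2 ->
    ceval T (upd (upd r' f (VClo r' f x M)) x v2) m M m' R ->
    ceval (TApp e1 e2 f x T) r m (CApp e1 e2) m' R
| cv_raise r m e v : eeval r e v -> ceval (TRaise e) r m (CRaise e) m (Res Exn v)
| cv_ref r m e v l : eeval r e v -> ~ in_dom m l ->
    ceval (TRef l e) r m (CRef e) (upd m l v) (Res Val (VLoc l))
| cv_assign r m e1 e2 l v : eeval r e1 (VLoc l) -> eeval r e2 v ->
    ceval (TAssign l e1 e2) r m (CAssign e1 e2) (upd m l v) (Res Val VUnit)
| cv_deref r m e l : eeval r e (VLoc l) -> in_dom m l ->
    ceval (TDeref l e) r m (CDeref e) m (Res Val (m l))
| cv_letS r m x M1 M2 T1 T2 m' v m'' R :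
    ceval T1 r m M1 m' (Res Val v) -> ceval T2 (upd r x v) m' M2 m'' R ->
    ceval (TLetS T1 x T2) r m (CLet x M1 M2) m'' R
| cv_letF r m x M1 M2 T m' v :
    ceval T r m M1 m' (Res Exn v) ->
    ceval (TLetF T) r m (CLet x M1 M2) m' (Res Exn v)
| cv_tryF r m M1 x M2 T1 T2 m' v m'' R :
    ceval T1 r m M1 m' (Res Exn v) -> ceval T2 (upd r x v) m' M2 m'' R ->
    ceval (TTryF T1 x T2) r m (CTry M1 x M2) m'' R
| cv_tryS r m M1 x M2 T1 m' v :
    ceval T1 r m M1 m' (Res Val v) ->
    ceval (TTryS T1) r m (CTry M1 x M2) m' (Res Val v)
| cv_caseL r m e x M1 y M2 v T m' R :
    eeval r e (VInl v) -> ceval T (upd r x v) m M1 m' R ->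
    ceval (TCaseL e x T y) r m (CCase e x M1 y M2) m' R
| cv_caseR r m e x M1 y M2 v T m' R :
    eeval r e (VInr v) -> ceval T (upd r y v) m M2 m' R ->
    ceval (TCaseR e x y T) r m (CCase e x M1 y M2) m' R.

(* v, e \searrow rho, e'  (first applicable rule) *)
Inductive eslice : ivalue -> iexpr -> env -> iexpr -> Prop :=
| es_hole e : eslice VHole e env_hole EHole
| es_var v x : v <> VHole -> eslice v (EVar x) (upd env_hole x v) (EVar x)
| es_fun r f x M M' : eslice (VClo r f x M) (EFun f x M') r (EFun f x M)
| es_unit : eslice VUnit EUnit env_hole EUnit
| es_inl v e r e' : eslice v e r e' -> eslice (VInl v) (EInl e) r (EInl e')
| es_inr v e r e' : eslice v e r e' -> eslice (VInr v) (EInr e) r (EInr e')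
| es_pair v1 v2 e1 e2 r1 r2 e1' e2' :
    eslice v1 e1 r1 e1' -> eslice v2 e2 r2 e2' ->
    eslice (VPair v1 v2) (EPair e1 e2) (envjoin r1 r2) (EPair e1' e2')
| es_fst v e r e' : v <> VHole -> eslice (VPair v VHole) e r e' -> eslice v (EFst e) r (EFst e')
| es_snd v e r e' : v <> VHole -> eslice (VPair VHole v) e r e' -> eslice v (ESnd e) r (ESnd e').

Definition bhole_applies (m : store) (R : result) (T : itrace) : Prop :=
  (exists k, R = Res k VHole) /\ erase m (writes T) = m.

(* B-Slice-box takes priority: every other
   rule carries the side condition ~ bhole_applies.  A premise output
   environment rho' written rho[x |-> v] in the paper is decomposed as
   v := rho' x and rho := rho'[x |-> box]. *)
Inductive cslice : store -> result -> itrace -> env -> store -> icomp -> itrace -> Prop :=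
| cs_hole m k T : erase m (writes T) = m ->
    cslice m (Res k VHole) T env_hole m CHole (THole k (writes T))
| cs_ret m v e r e' : ~ bhole_applies m (Res Val v) (TRet e) ->
    eslice v e r e' ->
    cslice m (Res Val v) (TRet e) r m (CRet e') (TRet e')
| cs_let m R T1 x T2 r' m' M2 U2 r1 m'' M1 U1 :
    ~ bhole_applies m R (TLetS T1 x T2) ->
    cslice m R T2 r' m' M2 U2 ->
    cslice m' (Res Val (r' x)) T1 r1 m'' M1 U1 ->
    cslice m R (TLetS T1 x T2) (envjoin r1 (upd r' x VHole)) m''
           (CLet x M1 M2) (TLetS U1 x U2)
| cs_letfail m v T1 r m' M1 U1 x :
    ~ bhole_applies m (Res Exn v) (TLetF T1) ->
    cslice m (Res Exn v) T1 r m' M1 U1 ->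
    cslice m (Res Exn v) (TLetF T1) r m' (CLet x M1 CHole) (TLetF U1)
| cs_caseL m R e x T y r' m' M1 U r2 e' :
    ~ bhole_applies m R (TCaseL e x T y) ->
    cslice m R T r' m' M1 U ->
    eslice (VInl (r' x)) e r2 e' ->
    cslice m R (TCaseL e x T y) (envjoin (upd r' x VHole) r2) m'
           (CCase e' x M1 y CHole) (TCaseL e' x U y)
| cs_caseR m R e x y T r' m' M2 U r2 e' :
    ~ bhole_applies m R (TCaseR e x y T) ->
    cslice m R T r' m' M2 U ->
    eslice (VInr (r' y)) e r2 e' ->
    cslice m R (TCaseR e x y T) (envjoin (upd r' y VHole) r2) m'
           (CCase e' x CHole y M2) (TCaseR e' x y U)
| cs_app m R e1 e2 f x T r' m' M U r2 e2' r1 e1' :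
    ~ bhole_applies m R (TApp e1 e2 f x T) ->
    cslice m R T r' m' M U ->
    eslice (r' x) e2 r2 e2' ->
    eslice (vjoin (upd r' x VHole f)
                  (VClo (upd (upd r' x VHole) f VHole) f x M)) e1 r1 e1' ->
    cslice m R (TApp e1 e2 f x T) (envjoin r1 r2) m'
           (CApp e1' e2') (TApp e1' e2' f x U)
| cs_raise m v e r e' :
    ~ bhole_applies m (Res Exn v) (TRaise e) ->
    eslice v e r e' ->
    cslice m (Res Exn v) (TRaise e) r m (CRaise e') (TRaise e')
| cs_tryfail m R T1 x T2 r' m' M2 U2 r2 m'' M1 U1 :
    ~ bhole_applies m R (TTryF T1 x T2) ->
    cslice m R T2 r' m' M2 U2 ->
    cslice m' (Res Exn (r' x)) T1 r2 m'' M1 U1 ->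
    cslice m R (TTryF T1 x T2) (envjoin (upd r' x VHole) r2) m''
           (CTry M1 x M2) (TTryF U1 x U2)
| cs_try m v T1 r m' M1 U1 x :
    ~ bhole_applies m (Res Val v) (TTryS T1) ->
    cslice m (Res Val v) T1 r m' M1 U1 ->
    cslice m (Res Val v) (TTryS T1) r m' (CTry M1 x CHole) (TTryS U1)
| cs_ref m v l e r e' :
    ~ bhole_applies m (Res Val v) (TRef l e) ->
    eslice (m l) e r e' ->
    cslice m (Res Val v) (TRef l e) r (upd m l VHole) (CRef e') (TRef l e')
| cs_assign m v l e1 e2 r2 e2' r1 e1' :
    ~ bhole_applies m (Res Val v) (TAssign l e1 e2) ->
    eslice (m l) e2 r2 e2' ->
    eslice (VLoc l) e1 r1 e1' ->
    cslice m (Res Val v) (TAssign l e1 e2) (envjoin r1 r2) (upd m l VHole)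
           (CAssign e1' e2') (TAssign l e1' e2')
| cs_deref m v l e r e' :
    ~ bhole_applies m (Res Val v) (TDeref l e) ->
    eslice (VLoc l) e r e' ->
    cslice m (Res Val v) (TDeref l e) r (stjoin m (upd store_hole l v))
           (CDeref e') (TDeref l e').

Definition in_prefix_in (sigma : env) (nu : store) (M : icomp) (T : itrace)
    (b : env * store * icomp * itrace) : Prop :=
  let: (r, m, N, U) := b in envle r sigma /\ stle m nu /\ cle N M /\ tle U T.

Definition in_prefix_out (nu' : store) (S : result) (a : store * result) : Prop :=
  stle a.1 nu' /\ rle a.2 S.

Definition bwd (sigma : env) (nu : store) (M : icomp) (T : itrace)
    (a : store * result) (b : env * store * icomp * itrace) : Prop :=
  in_prefix_in sigma nu M T b /\
  let: (r, m, N, U) := b in cslice a.1 a.2 T r m N U.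

Definition join_out (a a' : store * result) : store * result :=
  (stjoin a.1 a'.1, rjoin a.2 a'.2).

Definition join_in (b b' : env * store * icomp * itrace) : env * store * icomp * itrace :=
  let: (r, m, N, U) := b in let: (r', m', N', U') := b' in
  (envjoin r r', stjoin m m', cjoin N N', tjoin U U').

(* Backward slicing along a fixed trace is defined by structural recursion on
   the trace, so the theorem is proved by induction on the evaluation
   derivation, simultaneously for three slices: those of the two inputs and
   that of their join.  At each step the slices of the subtraces are joined by
   the induction hypothesis and then reassembled, using that joins of values
   below a common value are commutative and associative.  When one input is a
   hole, rule B-Slice-box fires for it, and the slice of the other input is
   shown to pass through the join unchanged: the hole input only contributes
   store locations that the trace does not write.

   Rules B-LetFail and B-Try do not constrain the binder of the sliced
   computation, so intermediate slices may contain closures whose code carries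
   arbitrary binder names; such slices are not prefixes of the evaluation.
   The induction is therefore carried out up to rebinding, which copies the
   binder names of the evaluated program into a slice.  Rebinding commutes
   with slicing and with joins, and it is the identity on prefixes, hence on
   the slices of the theorem. *)

From mathcomp Require Import all_boot finmap.
From Stdlib Require Import FunctionalExtensionality.

Scheme iexpr_mut := Induction for iexpr Sort Prop
with icomp_mut := Induction for icomp Sort Prop.
Combined Scheme syntax_mut from iexpr_mut, icomp_mut.

Scheme ele_mut := Induction for ele Sort Prop
with cle_mut := Induction for cle Sort Prop.
Combined Scheme syntax_le_mut from ele_mut, cle_mut.

Set Implicit Arguments.
Unset Strict Implicit.
Unset Printing Implicit Defensive.
Set Bullet Behavior "Strict Subproofs".

Local Open Scope fset_scope.

(** * Prefix orders and bounded joins *)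

Lemma syntax_le_refl : (forall e, ele e e) /\ (forall M, cle M M).
Proof.
by apply: (syntax_mut (fun e => ele e e) (fun M => cle M M)) => *; constructor.
Qed.

Lemma syntax_le_trans :
  (forall a b, ele a b -> forall c, ele b c -> ele a c) /\
  (forall a b, cle a b -> forall c, cle b c -> cle a c).
Proof.
apply: (syntax_le_mut (fun a b _ => forall c, ele b c -> ele a c)
                      (fun a b _ => forall c, cle b c -> cle a c)) => *;
  try constructor;
  match goal with H : _ _ ?c |- _ _ ?c => inversion H; subst; constructor; auto end.
Qed.

Lemma syntax_le_antisym :
  (forall a b, ele a b -> ele b a -> a = b) /\
  (forall a b, cle a b -> cle b a -> a = b).
Proof.
apply: (syntax_le_mut (fun a b _ => ele b a -> a = b) (fun a b _ => cle b a -> a = b)) => *;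
  match goal with H : _ _ _ |- _ => inversion H; subst; f_equal; auto end.
Qed.

Lemma syntax_join_ubl :
  (forall a c, ele a c -> forall b, ele b c -> ele a (ejoin a b)) /\
  (forall a c, cle a c -> forall b, cle b c -> cle a (cjoin a b)).
Proof.
have [ele_refl cle_refl] := syntax_le_refl.
apply: (syntax_le_mut (fun a c _ => forall b, ele b c -> ele a (ejoin a b))
                      (fun a c _ => forall b, cle b c -> cle a (cjoin a b))) => *;
  try constructor;
  match goal with H : _ _ _ |- _ => inversion H; subst; constructor; auto end.
Qed.

Lemma syntax_join_ubr :
  (forall a c, ele a c -> forall b, ele b c -> ele b (ejoin a b)) /\
  (forall a c, cle a c -> forall b, cle b c -> cle b (cjoin a b)).
Proof.
have [ele_refl cle_refl] := syntax_le_refl.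
apply: (syntax_le_mut (fun a c _ => forall b, ele b c -> ele b (ejoin a b))
                      (fun a c _ => forall b, cle b c -> cle b (cjoin a b))) => *;
  try by [apply: ele_refl | apply: cle_refl];
  match goal with H : _ _ _ |- _ => inversion H; subst; constructor; auto end.
Qed.

Lemma syntax_join_lub :
  (forall a c, ele a c -> forall b, ele b c -> ele (ejoin a b) c) /\
  (forall a c, cle a c -> forall b, cle b c -> cle (cjoin a b) c).
Proof.
apply: (syntax_le_mut (fun a c _ => forall b, ele b c -> ele (ejoin a b) c)
                      (fun a c _ => forall b, cle b c -> cle (cjoin a b) c)) => *;
  try done;
  match goal with H : _ _ _ |- _ => inversion H; subst; constructor; auto end.
Qed.

Lemma vle_refl v : vle v v.
Proof. elim: v => *; constructor; auto; exact: (proj2 syntax_le_refl). Qed.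

Lemma vle_trans a b c : vle a b -> vle b c -> vle a c.
Proof.
move=> H; elim: H c => [v||v v' Hv IH|v v' Hv IH|v1 v2 v1' v2' Hv1 IH1 Hv2 IH2
  |r r' f x M M' Hr IH HM|l] c Hc; try constructor; inversion Hc; subst; constructor; auto.
exact: (proj2 syntax_le_trans) HM _ _.
Qed.

Lemma vle_antisym a b : vle a b -> vle b a -> a = b.
Proof.
elim=> [v||v v' _ IH|v v' _ IH|v1 v2 v1' v2' _ IH1 _ IH2|r r' f x M M' _ IH HM|l] H;
  inversion H; subst; f_equal; auto.
- by apply: functional_extensionality => y; apply: IH.
- exact: (proj2 syntax_le_antisym).
Qed.

Lemma vjoin_ubl a b c : vle a c -> vle b c -> vle a (vjoin a b).
Proof.
move=> H; elim: H b => [v||v v' Hv IH|v v' Hv IH|v1 v2 v1' v2' Hv1 IH1 Hv2 IH2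
  |r r' f x M M' Hr IH HM|l] b Hb; try constructor;
  inversion Hb; subst; constructor; auto using vle_refl.
- exact: (proj2 syntax_le_refl).
- by apply: (proj2 syntax_join_ubl _ _ HM).
Qed.

Lemma vjoin_ubr a b c : vle a c -> vle b c -> vle b (vjoin a b).
Proof.
move=> H; elim: H b => [v||v v' Hv IH|v v' Hv IH|v1 v2 v1' v2' Hv1 IH1 Hv2 IH2
  |r r' f x M M' Hr IH HM|l] b Hb; try exact: vle_refl;
  inversion Hb; subst; constructor; auto using vle_refl.
by apply: (proj2 syntax_join_ubr _ _ HM).
Qed.

Lemma vjoin_lub a b c : vle a c -> vle b c -> vle (vjoin a b) c.
Proof.
move=> H; elim: H b => [v||v v' Hv IH|v v' Hv IH|v1 v2 v1' v2' Hv1 IH1 Hv2 IH2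
  |r r' f x M M' Hr IH HM|l] b Hb //;
  inversion Hb; subst; constructor; auto.
by apply: (proj2 syntax_join_lub _ _ HM).
Qed.

Section BoundedJoin.

Variables (A : Type) (le : A -> A -> Prop) (join : A -> A -> A).
Hypothesis le_trans : forall a b c, le a b -> le b c -> le a c.
Hypothesis le_antisym : forall a b, le a b -> le b a -> a = b.
Hypothesis join_ubl : forall a b c, le a c -> le b c -> le a (join a b).
Hypothesis join_ubr : forall a b c, le a c -> le b c -> le b (join a b).
Hypothesis join_lub : forall a b c, le a c -> le b c -> le (join a b) c.

Let le_joinl a b c d : le a c -> le b c -> le d a -> le d (join a b).
Proof. by move=> ac bc da; apply: le_trans da (join_ubl ac bc). Qed.

Let le_joinr a b c d : le a c -> le b c -> le d b -> le d (join a b).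
Proof. by move=> ac bc db; apply: le_trans db (join_ubr ac bc). Qed.

Lemma bounded_joinC a b c : le a c -> le b c -> join a b = join b a.
Proof.
by move=> ac bc; apply: le_antisym; apply: join_lub;
  [apply: join_ubr bc ac | apply: join_ubl bc ac | apply: join_ubr ac bc | apply: join_ubl ac bc].
Qed.

Lemma bounded_joinA a b d c : le a c -> le b c -> le d c ->
  join a (join b d) = join (join a b) d.
Proof.
move=> ac bc dc; have abc := join_lub ac bc; have bdc := join_lub bc dc.
apply: le_antisym; apply: join_lub.
- exact: le_joinl abc dc (join_ubl ac bc).
- exact: join_lub (le_joinl abc dc (join_ubr ac bc)) (join_ubr abc dc).
- exact: join_lub (join_ubl ac bdc) (le_joinr ac bdc (join_ubl bc dc)).
- exact: le_joinr ac bdc (join_ubr bc dc).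
Qed.

Lemma bounded_joinACA a b d e c : le a c -> le b c -> le d c -> le e c ->
  join (join a b) (join d e) = join (join a d) (join b e).
Proof.
move=> ac bc dc ec; have abc := join_lub ac bc; have adc := join_lub ac dc.
rewrite (bounded_joinA abc dc ec) -(bounded_joinA ac bc dc) (bounded_joinC bc dc).
by rewrite (bounded_joinA ac dc bc) (bounded_joinA adc bc ec).
Qed.

End BoundedJoin.

Lemma vjoinC a b c : vle a c -> vle b c -> vjoin a b = vjoin b a.
Proof. exact: (bounded_joinC (@vle_antisym) (@vjoin_ubl) (@vjoin_ubr) (@vjoin_lub)). Qed.

Lemma vjoinA a b d c : vle a c -> vle b c -> vle d c ->
  vjoin a (vjoin b d) = vjoin (vjoin a b) d.
Proof.
exact: (bounded_joinA (@vle_trans) (@vle_antisym) (@vjoin_ubl) (@vjoin_ubr) (@vjoin_lub)).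
Qed.

Lemma vjoinACA a b d e c : vle a c -> vle b c -> vle d c -> vle e c ->
  vjoin (vjoin a b) (vjoin d e) = vjoin (vjoin a d) (vjoin b e).
Proof.
exact: (bounded_joinACA (@vle_trans) (@vle_antisym) (@vjoin_ubl) (@vjoin_ubr) (@vjoin_lub)).
Qed.

Lemma vjoin_hole v : vjoin v VHole = v.
Proof. by case: v. Qed.

Lemma vjoin_eq_hole a b : vjoin a b = VHole -> a = VHole /\ b = VHole.
Proof. by case: a; case: b. Qed.

Lemma ejoin_hole e : ejoin e EHole = e.
Proof. by case: e. Qed.

Lemma cjoin_hole M : cjoin M CHole = M.
Proof. by case: M. Qed.

Lemma envjoin_hole r : envjoin r env_hole = r.
Proof. by apply: functional_extensionality => y; apply: vjoin_hole. Qed.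

Lemma envjoin_hole_l r : envjoin env_hole r = r.
Proof. by []. Qed.

Lemma envjoin_lub r r' s : envle r s -> envle r' s -> envle (envjoin r r') s.
Proof. by move=> Hr Hr' y; apply: vjoin_lub. Qed.

Lemma envjoinC r r' s : envle r s -> envle r' s -> envjoin r r' = envjoin r' r.
Proof. by move=> Hr Hr'; apply: functional_extensionality => y; apply: vjoinC. Qed.

Lemma envjoinA r r' r'' s : envle r s -> envle r' s -> envle r'' s ->
  envjoin r (envjoin r' r'') = envjoin (envjoin r r') r''.
Proof. by move=> H H' H''; apply: functional_extensionality => y; apply: vjoinA. Qed.

Lemma envjoinACA r1 r2 r3 r4 s :
  envle r1 s -> envle r2 s -> envle r3 s -> envle r4 s ->
  envjoin (envjoin r1 r2) (envjoin r3 r4) = envjoin (envjoin r1 r3) (envjoin r2 r4).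
Proof. by move=> H1 H2 H3 H4; apply: functional_extensionality => y; apply: vjoinACA. Qed.

Lemma stjoin_lub m m' n : stle m n -> stle m' n -> stle (stjoin m m') n.
Proof. exact: envjoin_lub. Qed.

Lemma stjoinC m m' n : stle m n -> stle m' n -> stjoin m m' = stjoin m' m.
Proof. exact: envjoinC. Qed.

Lemma stjoinA m m' m'' n : stle m n -> stle m' n -> stle m'' n ->
  stjoin m (stjoin m' m'') = stjoin (stjoin m m') m''.
Proof. exact: envjoinA. Qed.

Lemma stjoinACA m1 m2 m3 m4 n :
  stle m1 n -> stle m2 n -> stle m3 n -> stle m4 n ->
  stjoin (stjoin m1 m2) (stjoin m3 m4) = stjoin (stjoin m1 m3) (stjoin m2 m4).
Proof. exact: envjoinACA. Qed.

Lemma rle_rjoin R R' S : rle R S -> rle R' S -> rle (rjoin R R') S.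
Proof. by case: R R' S => [k v] [k' v'] [kS w] [-> Hv] [_ Hv']; split; last apply: vjoin_lub. Qed.

Lemma upd_envjoin r r' x a b :
  upd (envjoin r r') x (vjoin a b) = envjoin (upd r x a) (upd r' x b).
Proof. by apply: functional_extensionality => y; rewrite /envjoin /upd; case: (y == x). Qed.

Lemma upd_hole_envjoin r r' x :
  upd (envjoin r r') x VHole = envjoin (upd r x VHole) (upd r' x VHole).
Proof. exact: upd_envjoin r r' x VHole VHole. Qed.

Lemma upd_hole_stjoin m m' l :
  upd (stjoin m m') l VHole = stjoin (upd m l VHole) (upd m' l VHole).
Proof. exact: upd_hole_envjoin. Qed.

Lemma upd_store_hole_join l a b :
  upd store_hole l (vjoin a b) = stjoin (upd store_hole l a) (upd store_hole l b).
Proof. exact: upd_envjoin env_hole env_hole l a b. Qed.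

Lemma upd_same (m : nat -> ivalue) l v : m l = v -> upd m l v = m.
Proof. by move=> <-; apply: functional_extensionality => y; rewrite /upd; case: eqP => [->|]. Qed.

Lemma upd_env_hole x : upd env_hole x VHole = env_hole.
Proof. exact: upd_same. Qed.

Lemma envle_upd r s x v : envle r s -> vle v (s x) -> envle (upd r x v) s.
Proof. by move=> Hr Hv y; rewrite /upd; case: eqP => [->|]. Qed.

Lemma envle_upd_hole r s x v : envle r (upd s x v) -> envle (upd r x VHole) s.
Proof.
by move=> Hr y; move: (Hr y); rewrite /upd; case: (y == x) => //; constructor.
Qed.

Lemma envle_upd_at r s x v : envle r (upd s x v) -> vle (r x) v.
Proof. by move=> Hr; move: (Hr x); rewrite /upd eqxx. Qed.

Lemma envle_hole s : envle env_hole s.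
Proof. by move=> y; constructor. Qed.

Lemma vle_clo_inv r f x M r' f' x' M' :
  vle (VClo r f x M) (VClo r' f' x' M') -> envle r r' /\ cle M M'.
Proof. by move=> H; inversion H; subst. Qed.

(** * Backward slicing of expressions *)

(* [inversion] can leave equations between applications of the same
   constructor behind; they are injected here. *)
Ltac inv H :=
  inversion H; subst;
  repeat match goal with E : ?C _ = ?C _ |- _ => injection E; clear E; intros; subst end.

Lemma eslice_sound w e r e' s v :
  eslice w e r e' -> eeval s e v -> vle w v -> envle r s /\ ele e' e.
Proof.
move=> H; elim: H s v => {w e r e'}
  [e|u x Hu|r f x M M'||w e r e' _ IH|w e r e' _ IH
  |w1 w2 e1 e2 r1 r2 e1' e2' _ IH1 _ IH2|w e r e' _ _ IH|w e r e' _ _ IH] s v Hev Hle.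
- by split; [apply: envle_hole | constructor].
- by inv Hev; split; [exact: (envle_upd (envle_hole s) Hle) | constructor].
- by inv Hev; have [? ?] := vle_clo_inv Hle; split; [|constructor].
- by split; [apply: envle_hole | constructor].
- inv Hev; inv Hle; have [? ?] := IH _ _ ltac:(eassumption) ltac:(eassumption).
  by split; [|constructor].
- inv Hev; inv Hle; have [? ?] := IH _ _ ltac:(eassumption) ltac:(eassumption).
  by split; [|constructor].
- inv Hev; inv Hle.
  have [? ?] := IH1 _ _ ltac:(eassumption) ltac:(eassumption).
  have [? ?] := IH2 _ _ ltac:(eassumption) ltac:(eassumption).
  by split; [apply: envjoin_lub | constructor].
- inv Hev; have [? ?] := IH _ _ ltac:(eassumption) (vle_pair Hle (vle_hole _)).
  by split; [|constructor].
- inv Hev; have [? ?] := IH _ _ ltac:(eassumption) (vle_pair (vle_hole _) Hle).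
  by split; [|constructor].
Qed.

Lemma eslice_det w e r1 e1 r2 e2 :
  eslice w e r1 e1 -> eslice w e r2 e2 -> r1 = r2 /\ e1 = e2.
Proof.
move=> H1; elim: H1 r2 e2 => {w e r1 e1}
  [e|u x Hu|r f x M M'||w e r e' _ IH|w e r e' _ IH
  |w1 w2 e1 e2 r1 r2 e1' e2' _ IH1 _ IH2|w e r e' Hw _ IH|w e r e' Hw _ IH] r0 e0 H2;
  inv H2 => //.
- by have [-> ->] := IH _ _ ltac:(eassumption).
- by have [-> ->] := IH _ _ ltac:(eassumption).
- by have [-> ->] := IH1 _ _ ltac:(eassumption); have [-> ->] := IH2 _ _ ltac:(eassumption).
- by have [-> ->] := IH _ _ ltac:(eassumption).
- by have [-> ->] := IH _ _ ltac:(eassumption).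
Qed.

Lemma eslice_join w w' e r1 r2 e1 e2 s v :
  eslice w e r1 e1 -> eslice w' e r2 e2 -> eeval s e v -> vle w v -> vle w' v ->
  eslice (vjoin w w') e (envjoin r1 r2) (ejoin e1 e2).
Proof.
move=> H1; elim: H1 w' r2 e2 s v => {w e r1 e1}
  [e|u x Hu|r f x M M'||w e r e' H IH|w e r e' H IH
  |w1 w2 e1 e2 r1 r2 e1' e2' H1 IH1 H2 IH2|w e r e' Hw H IH|w e r e' Hw H IH]
  w' r0 e0 s v H0 Hev Hle Hle'; first exact: H0.
all: inv H0; first by rewrite vjoin_hole envjoin_hole ejoin_hole; econstructor; eassumption.
- rewrite -upd_envjoin; apply: es_var.
  by move/vjoin_eq_hole => [].
- exact: es_fun.
- exact: es_unit.
- inv Hev; inv Hle; inv Hle'; rewrite /=; apply: es_inl; eapply IH; eassumption.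
- inv Hev; inv Hle; inv Hle'; rewrite /=; apply: es_inr; eapply IH; eassumption.
- inv Hev; inv Hle; inv Hle'.
  rewrite (envjoinACA (s := s)); try by eapply proj1, eslice_sound; eassumption.
  by apply: es_pair; [eapply IH1 | eapply IH2]; eassumption.
- inv Hev; apply: es_fst; first by move/vjoin_eq_hole => [].
  by eapply (IH (VPair _ VHole)); eauto using vle_pair, vle_hole.
- inv Hev; apply: es_snd; first by move/vjoin_eq_hole => [].
  by eapply (IH (VPair VHole _)); eauto using vle_pair, vle_hole.
Qed.

(* The value [v1 ⊔ <rho, fun f(x).M>] of rule B-App, for the environment
   [r = rho[f |-> v1][x |-> v2]] returned by slicing the body. *)
Definition fun_slice (r : env) (f x : var) (M : icomp) : ivalue :=
  vjoin (upd r x VHole f) (VClo (upd (upd r x VHole) f VHole) f x M).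

Section FunSlice.

Variables (r0 : env) (f x : var) (M : icomp) (v2 : ivalue).
Let clo := VClo r0 f x M.

Lemma fun_slice_rec_le r :
  envle r (upd (upd r0 f clo) x v2) -> vle (upd r x VHole f) clo.
Proof. by move=> Hr; move: (Hr f); rewrite /upd; case: (f == x); [constructor | rewrite eqxx]. Qed.

Lemma fun_slice_clo_le r N :
  envle r (upd (upd r0 f clo) x v2) -> cle N M ->
  vle (VClo (upd (upd r x VHole) f VHole) f x N) clo.
Proof.
move=> Hr HN; constructor=> // y; move: (Hr y); rewrite /upd.
by case: (y == f); [constructor | case: (y == x); [constructor |]].
Qed.

Lemma fun_slice_le r N :
  envle r (upd (upd r0 f clo) x v2) -> cle N M -> vle (fun_slice r f x N) clo.
Proof.
by move=> Hr HN; apply: vjoin_lub (fun_slice_rec_le Hr) (fun_slice_clo_le Hr HN).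
Qed.

Lemma fun_slice_join r r' N N' :
  envle r (upd (upd r0 f clo) x v2) -> envle r' (upd (upd r0 f clo) x v2) ->
  cle N M -> cle N' M ->
  fun_slice (envjoin r r') f x (cjoin N N') = vjoin (fun_slice r f x N) (fun_slice r' f x N').
Proof.
move=> Hr Hr' HN HN'; rewrite /fun_slice !upd_hole_envjoin.
exact: (vjoinACA (fun_slice_rec_le Hr) (fun_slice_rec_le Hr')
                 (fun_slice_clo_le Hr HN) (fun_slice_clo_le Hr' HN')).
Qed.

End FunSlice.

(** * Locations not written by a trace *)

Lemma ceval_unwritten T s n M n' S l :
  ceval T s n M n' S -> l \notin writes T -> n' l = n l.
Proof.
move=> Hc; elim: Hc => //= {T s n M n' S}.
- by move=> s n e v l' _ _; rewrite in_fset1 /upd => /negbTE ->.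
- by move=> s n e1 e2 l' v _ _; rewrite in_fset1 /upd => /negbTE ->.
- move=> s n x M1 M2 T1 T2 n1 v n2 R _ IH1 _ IH2.
  by rewrite in_fsetU negb_or => /andP [/IH1 <- /IH2].
- move=> s n M1 x M2 T1 T2 n1 v n2 R _ IH1 _ IH2.
  by rewrite in_fsetU negb_or => /andP [/IH1 <- /IH2].
Qed.

Lemma erased_at m L l : erase m L = m -> l \in L -> m l = VHole.
Proof. by move=> <- Hl; rewrite /erase Hl. Qed.

Lemma erased_intro m L : (forall l, l \in L -> m l = VHole) -> erase m L = m.
Proof.
by move=> H; apply: functional_extensionality => l; rewrite /erase; case: ifP => // /H.
Qed.

Lemma erased_sub m L L' : erase m L = m -> L' `<=` L -> erase m L' = m.
Proof. by move=> Hm /fsubsetP HL; apply: erased_intro => l /HL; apply: erased_at. Qed.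

Lemma erased_stjoin m m' L :
  erase (stjoin m m') L = stjoin m m' <-> erase m L = m /\ erase m' L = m'.
Proof.
split=> [H | [H H']]; last first.
  by apply: erased_intro => l Hl; rewrite /stjoin (erased_at H Hl) (erased_at H' Hl).
by split; apply: erased_intro => l Hl; have [? ?] := vjoin_eq_hole (erased_at H Hl).
Qed.

Lemma stle_unwritten T s n M n' S mu :
  ceval T s n M n' S -> stle mu n' -> erase mu (writes T) = mu -> stle mu n.
Proof.
move=> Hc Hmu He l; case: (boolP (l \in writes T)) => Hl.
- by rewrite (erased_at He Hl); constructor.
- by rewrite -(ceval_unwritten Hc Hl).
Qed.

(** * Rebinding *)

Fixpoint rebinde (c w : iexpr) {struct c} : iexpr :=
  match c, w with
  | EInl a, EInl b => EInl (rebinde a b)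
  | EInr a, EInr b => EInr (rebinde a b)
  | EPair a1 a2, EPair b1 b2 => EPair (rebinde a1 b1) (rebinde a2 b2)
  | EFst a, EFst b => EFst (rebinde a b)
  | ESnd a, ESnd b => ESnd (rebinde a b)
  | EFun f x M, EFun _ _ N => EFun f x (rebindc M N)
  | _, _ => w
  end
with rebindc (c w : icomp) {struct c} : icomp :=
  match c, w with
  | CRet a, CRet b => CRet (rebinde a b)
  | CLet x A1 A2, CLet _ B1 B2 => CLet x (rebindc A1 B1) (rebindc A2 B2)
  | CApp a1 a2, CApp b1 b2 => CApp (rebinde a1 b1) (rebinde a2 b2)
  | CCase a x A1 y A2, CCase b _ B1 _ B2 =>
      CCase (rebinde a b) x (rebindc A1 B1) y (rebindc A2 B2)
  | CRaise a, CRaise b => CRaise (rebinde a b)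
  | CTry A1 x A2, CTry B1 _ B2 => CTry (rebindc A1 B1) x (rebindc A2 B2)
  | CRef a, CRef b => CRef (rebinde a b)
  | CAssign a1 a2, CAssign b1 b2 => CAssign (rebinde a1 b1) (rebinde a2 b2)
  | CDeref a, CDeref b => CDeref (rebinde a b)
  | _, _ => w
  end.

Fixpoint rebindv (c w : ivalue) {struct c} : ivalue :=
  match c, w with
  | VInl a, VInl b => VInl (rebindv a b)
  | VInr a, VInr b => VInr (rebindv a b)
  | VPair a1 a2, VPair b1 b2 => VPair (rebindv a1 b1) (rebindv a2 b2)
  | VClo s f x M, VClo r _ _ N => VClo (fun y => rebindv (s y) (r y)) f x (rebindc M N)
  | _, _ => w
  end.

Definition rebindf (s r : nat -> ivalue) : nat -> ivalue := fun y => rebindv (s y) (r y).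

Definition rebindr (S R : result) : result :=
  match R, S with Res k v, Res _ w => Res k (rebindv w v) end.

Fixpoint rebindt (c w : itrace) {struct c} : itrace :=
  match c, w with
  | TRet a, TRet b => TRet (rebinde a b)
  | TLetF A, TLetF B => TLetF (rebindt A B)
  | TLetS A1 x A2, TLetS B1 _ B2 => TLetS (rebindt A1 B1) x (rebindt A2 B2)
  | TApp a1 a2 f x A, TApp b1 b2 _ _ B => TApp (rebinde a1 b1) (rebinde a2 b2) f x (rebindt A B)
  | TCaseL a x A y, TCaseL b _ B _ => TCaseL (rebinde a b) x (rebindt A B) y
  | TCaseR a x y A, TCaseR b _ _ B => TCaseR (rebinde a b) x y (rebindt A B)
  | TRaise a, TRaise b => TRaise (rebinde a b)
  | TTryS A, TTryS B => TTryS (rebindt A B)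
  | TTryF A1 x A2, TTryF B1 _ B2 => TTryF (rebindt A1 B1) x (rebindt A2 B2)
  | TRef l a, TRef _ b => TRef l (rebinde a b)
  | TAssign l a1 a2, TAssign _ b1 b2 => TAssign l (rebinde a1 b1) (rebinde a2 b2)
  | TDeref l a, TDeref _ b => TDeref l (rebinde a b)
  | _, _ => w
  end.

Lemma rebindv_hole c : rebindv c VHole = VHole.
Proof. by case: c. Qed.

Lemma rebinde_hole c : rebinde c EHole = EHole.
Proof. by case: c. Qed.

Lemma rebindc_hole c : rebindc c CHole = CHole.
Proof. by case: c. Qed.

Lemma rebindf_hole s : rebindf s env_hole = env_hole.
Proof. by apply: functional_extensionality => y; apply: rebindv_hole. Qed.

Lemma rebindt_hole c k L : rebindt c (THole k L) = THole k L.
Proof. by case: c. Qed.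

Lemma rebindv_eq_hole c w : rebindv c w = VHole -> w = VHole.
Proof. by case: c; case: w. Qed.

Lemma rebind_id :
  (forall w c, ele w c -> rebinde c w = w) /\ (forall w c, cle w c -> rebindc c w = w).
Proof.
apply: (syntax_le_mut (fun w c _ => rebinde c w = w) (fun w c _ => rebindc c w = w)) => /= *;
  rewrite ?rebinde_hole ?rebindc_hole; congruence.
Qed.

Lemma rebinde_id w c : ele w c -> rebinde c w = w.
Proof. exact: (proj1 rebind_id). Qed.

Lemma rebindc_id w c : cle w c -> rebindc c w = w.
Proof. exact: (proj2 rebind_id). Qed.

Lemma rebindv_id w c : vle w c -> rebindv c w = w.
Proof.
elim=> {w c} /= [v||v v' _ ->|v v' _ ->|v1 v2 v1' v2' _ -> _ ->|r r' f x M M' _ IH HM|l] //.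
- exact: rebindv_hole.
- congr VClo; first exact: functional_extensionality.
  exact: rebindc_id.
Qed.

Lemma rebindf_id r s : envle r s -> rebindf s r = r.
Proof. by move=> H; apply: functional_extensionality => y; apply: rebindv_id. Qed.

Lemma rebindr_id R S : rle R S -> rebindr S R = R.
Proof. by case: R S => [k v] [k' w] [_ /rebindv_id /= ->]. Qed.

Lemma rebindt_id U T : tle U T -> rebindt T U = U.
Proof.
elim=> {U T} /= [T||||||||||||]; try by case: T.
all: by move=> *; rewrite ?rebinde_id; congruence.
Qed.

Lemma stle_rebindf_id m n : stle m n -> stle (rebindf n m) n.
Proof. by move=> H; rewrite rebindf_id. Qed.

Lemma rle_rebindr_id R S : rle R S -> rle (rebindr S R) S.
Proof. by move=> H; rewrite rebindr_id. Qed.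

Lemma rebind_join :
  (forall c a b, ele (rebinde c a) c -> ele (rebinde c b) c ->
     rebinde c (ejoin a b) = ejoin (rebinde c a) (rebinde c b)) /\
  (forall c a b, cle (rebindc c a) c -> cle (rebindc c b) c ->
     rebindc c (cjoin a b) = cjoin (rebindc c a) (rebindc c b)).
Proof.
apply: (syntax_mut
  (fun c => forall a b, ele (rebinde c a) c -> ele (rebinde c b) c ->
     rebinde c (ejoin a b) = ejoin (rebinde c a) (rebinde c b))
  (fun c => forall a b, cle (rebindc c a) c -> cle (rebindc c b) c ->
     rebindc c (cjoin a b) = cjoin (rebindc c a) (rebindc c b)));
  intros until a; move=> b Ha Hb;
  destruct a; rewrite /= in Ha *; try done; try (by inv Ha);
  destruct b; rewrite /= in Hb *; try done; try (by inv Hb);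
  inv Ha; inv Hb; f_equal; auto.
Qed.

Lemma rebindv_join c a b : vle (rebindv c a) c -> vle (rebindv c b) c ->
  rebindv c (vjoin a b) = vjoin (rebindv c a) (rebindv c b).
Proof.
elim: c a b => [|c IH|c IH|c1 IH1 c2 IH2|s IH f x M|l|] a b Ha Hb;
  destruct a; rewrite /= in Ha *; try done; try (by inv Ha);
  destruct b; rewrite /= in Hb *; try done; try (by inv Hb);
  inv Ha; inv Hb; f_equal; auto.
- by apply: functional_extensionality => y; apply: IH.
- exact: (proj2 rebind_join).
Qed.

Lemma rebindf_join s a b : envle (rebindf s a) s -> envle (rebindf s b) s ->
  rebindf s (envjoin a b) = envjoin (rebindf s a) (rebindf s b).
Proof.
by move=> Ha Hb; apply: functional_extensionality => y; apply: rebindv_join (Ha y) (Hb y).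
Qed.

Lemma rebindf_upd_at s r x v : rebindf (upd s x v) r x = rebindv v (r x).
Proof. by rewrite /rebindf /upd eqxx. Qed.

Lemma rebindf_upd_hole s r x v :
  rebindf s (upd r x VHole) = upd (rebindf (upd s x v) r) x VHole.
Proof.
apply: functional_extensionality => y; rewrite /rebindf /upd.
by case: eqP => // _; apply: rebindv_hole.
Qed.

Lemma rebindf_upd_env s x w : rebindf s (upd env_hole x w) = upd env_hole x (rebindv (s x) w).
Proof.
apply: functional_extensionality => y; rewrite /rebindf /upd.
by case: eqP => [-> | _] //; apply: rebindv_hole.
Qed.

Lemma eslice_rebind w e r e' s v :
  eslice w e r e' -> eeval s e v -> vle (rebindv v w) v ->
  eslice (rebindv v w) e (rebindf s r) (rebinde e e').
Proof.
move=> H; elim: H s v => {w e r e'}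
  [e|u x Hu|r f x M M'||w e r e' _ IH|w e r e' _ IH
  |w1 w2 e1 e2 r1 r2 e1' e2' _ IH1 _ IH2|w e r e' Hw _ IH|w e r e' Hw _ IH] s v Hev Hle.
- by rewrite rebindv_hole rebindf_hole rebinde_hole; constructor.
- inv Hev; rewrite rebindf_upd_env; constructor.
  by move/rebindv_eq_hole.
- by inv Hev; constructor.
- by inv Hev; rewrite rebindf_hole; constructor.
- by inv Hev; inv Hle; constructor; apply: IH.
- by inv Hev; inv Hle; constructor; apply: IH.
- inv Hev; inv Hle.
  have Hs1 := IH1 _ _ ltac:(eassumption) ltac:(eassumption).
  have Hs2 := IH2 _ _ ltac:(eassumption) ltac:(eassumption).
  rewrite /= rebindf_join; first exact: es_pair.
  all: by eapply proj1, eslice_sound; eassumption.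
- inv Hev; apply: es_fst; first by move/rebindv_eq_hole.
  have := IH _ _ ltac:(eassumption); rewrite /= rebindv_hole; apply.
  by constructor; [|constructor].
- inv Hev; apply: es_snd; first by move/rebindv_eq_hole.
  have := IH _ _ ltac:(eassumption); rewrite /= rebindv_hole; apply.
  by constructor; [constructor|].
Qed.

Lemma eslice_rebind_sound w e r e' s v :
  eslice w e r e' -> eeval s e v -> vle (rebindv v w) v ->
  envle (rebindf s r) s /\ ele (rebinde e e') e.
Proof. by move=> H Hev Hw; apply: eslice_sound (eslice_rebind H Hev Hw) Hev Hw. Qed.

Lemma eslice_rebind_join w1 w2 w3 e r1 r2 r3 e1 e2 e3 s v :
  eslice w1 e r1 e1 -> eslice w2 e r2 e2 -> eslice w3 e r3 e3 -> eeval s e v ->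
  vle (rebindv v w1) v -> vle (rebindv v w2) v ->
  rebindv v w3 = vjoin (rebindv v w1) (rebindv v w2) ->
  rebindf s r3 = envjoin (rebindf s r1) (rebindf s r2) /\
  rebinde e e3 = ejoin (rebinde e e1) (rebinde e e2).
Proof.
move=> H1 H2 H3 Hev Hw1 Hw2 Hw3.
have Hw3' : vle (rebindv v w3) v by rewrite Hw3; apply: vjoin_lub.
have := eslice_rebind H3 Hev Hw3'; rewrite Hw3 => H3'.
apply: eslice_det H3' _.
exact: eslice_join (eslice_rebind H1 Hev Hw1) (eslice_rebind H2 Hev Hw2) Hev Hw1 Hw2.
Qed.

Lemma eslice_rebind_det w2 w3 e r2 r3 e2 e3 s v :
  eslice w2 e r2 e2 -> eslice w3 e r3 e3 -> eeval s e v ->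
  vle (rebindv v w2) v -> rebindv v w3 = rebindv v w2 ->
  rebindf s r3 = rebindf s r2 /\ rebinde e e3 = rebinde e e2.
Proof.
move=> H2 H3 Hev Hw2 Hw3; have := eslice_rebind H3 Hev; rewrite Hw3 => /(_ Hw2) H3'.
exact: eslice_det H3' (eslice_rebind H2 Hev Hw2).
Qed.

Lemma erase_rebindf n mu L : erase (rebindf n mu) L = rebindf n mu <-> erase mu L = mu.
Proof.
split=> H; apply: erased_intro => l Hl.
- exact: rebindv_eq_hole (erased_at H Hl).
- by rewrite /rebindf (erased_at H Hl) rebindv_hole.
Qed.

Lemma rebindf_unwritten T s n M n' S mu :
  ceval T s n M n' S -> erase mu (writes T) = mu -> rebindf n mu = rebindf n' mu.
Proof.
move=> Hc He; apply: functional_extensionality => l; rewrite /rebindf.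
case: (boolP (l \in writes T)) => Hl; first by rewrite (erased_at He Hl) !rebindv_hole.
by rewrite (ceval_unwritten Hc Hl).
Qed.

Lemma stle_rebindf_unwritten T s n M n' S mu :
  ceval T s n M n' S -> erase mu (writes T) = mu ->
  stle (rebindf n' mu) n' -> stle (rebindf n mu) n.
Proof.
move=> Hc He H; rewrite (rebindf_unwritten Hc He).
by apply: stle_unwritten Hc H _; apply/erase_rebindf.
Qed.

Lemma envle_rebindf_join s a b :
  envle (rebindf s a) s -> envle (rebindf s b) s -> envle (rebindf s (envjoin a b)) s.
Proof. by move=> Ha Hb; rewrite rebindf_join //; apply: envjoin_lub. Qed.

Lemma envle_rebindf_upd_hole s r x v :
  envle (rebindf (upd s x v) r) (upd s x v) -> envle (rebindf s (upd r x VHole)) s.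
Proof. by rewrite (rebindf_upd_hole _ _ _ v); apply: envle_upd_hole. Qed.

Lemma vle_rebindf_upd_at s r x v :
  envle (rebindf (upd s x v) r) (upd s x v) -> vle (rebindv v (r x)) v.
Proof. by rewrite -(rebindf_upd_at s r x v); apply: envle_upd_at. Qed.

Lemma rebindv_fun_slice r0 f x M v2 r N :
  let s := upd (upd r0 f (VClo r0 f x M)) x v2 in
  envle (rebindf s r) s -> cle (rebindc M N) M ->
  rebindv (VClo r0 f x M) (fun_slice r f x N) = fun_slice (rebindf s r) f x (rebindc M N).
Proof.
move=> s Hr HN.
have Ef : rebindv (VClo r0 f x M) (upd r x VHole f) = upd (rebindf s r) x VHole f.
  by rewrite /rebindf /s /upd; case: eqP => [_|_]; [apply: rebindv_hole | rewrite eqxx].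
have Eclo : rebindv (VClo r0 f x M) (VClo (upd (upd r x VHole) f VHole) f x N) =
            VClo (upd (upd (rebindf s r) x VHole) f VHole) f x (rebindc M N).
  rewrite /=; congr VClo; apply: functional_extensionality => y; rewrite /rebindf /s /upd.
  by case: (y == f); [|case: (y == x)]; rewrite ?rebindv_hole.
rewrite /fun_slice rebindv_join ?Ef ?Eclo //.
- exact: fun_slice_rec_le Hr.
- exact: fun_slice_clo_le Hr HN.
Qed.

Lemma vle_rebindv_fun_slice r0 f x M v2 r N :
  let s := upd (upd r0 f (VClo r0 f x M)) x v2 in
  envle (rebindf s r) s -> cle (rebindc M N) M ->
  vle (rebindv (VClo r0 f x M) (fun_slice r f x N)) (VClo r0 f x M).
Proof. by move=> s Hr HN; rewrite (rebindv_fun_slice Hr HN); exact: fun_slice_le Hr HN. Qed.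

Lemma stle_upd_store_hole n l v : vle v (n l) -> stle (upd store_hole l v) n.
Proof. exact: envle_upd (envle_hole n). Qed.

Lemma rebindf_deref n mu l v :
  stle (rebindf n mu) n -> vle (rebindv (n l) v) (n l) ->
  rebindf n (stjoin mu (upd store_hole l v)) =
  stjoin (rebindf n mu) (upd store_hole l (rebindv (n l) v)).
Proof.
move=> Hmu Hv; have El := rebindf_upd_env n l v.
change (rebindf n (envjoin mu (upd env_hole l v)) =
        envjoin (rebindf n mu) (upd env_hole l (rebindv (n l) v))).
rewrite rebindf_join; [by congr envjoin | by [] | by rewrite El; apply: stle_upd_store_hole].
Qed.

(** * Soundness of backward slicing *)

Lemma cslice_sound mu R T r m N U s n M n' S :
  cslice mu R T r m N U -> ceval T s n M n' S ->
  stle (rebindf n' mu) n' -> rle (rebindr S R) S ->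
  envle (rebindf s r) s /\ stle (rebindf n m) n /\ cle (rebindc M N) M.
Proof.
move=> H; elim: H s n M n' S => {mu R T r m N U}.
- move=> mu k T He s n M n' S Hc Hmu _; rewrite rebindf_hole rebindc_hole.
  by split; [apply: envle_hole | split; [apply: stle_rebindf_unwritten Hc He Hmu | constructor]].
- move=> mu v e r e' _ Hes s n M n' S Hc Hmu HR; inv Hc; case: HR => _ Hv.
  by have [? ?] := eslice_rebind_sound Hes ltac:(eassumption) Hv; do ! constructor.
- move=> mu R T1 x T2 r' m' M2 U2 r1 m'' M1 U1 _ _ IH2 _ IH1 s n M n' S Hc Hmu HR.
  inversion Hc as [| | | | | | s0 n0 x0 M1' M2' T10 T20 n1 v n2 R0 Hc1 Hc2 | | | | |]; subst.
  have [Hr' [Hm' HM2]] := IH2 _ _ _ _ _ Hc2 Hmu HR.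
  have [Hr1 [Hm'' HM1]] := IH1 _ _ _ _ _ Hc1 Hm' (conj erefl (vle_rebindf_upd_at Hr')).
  split; first exact: envle_rebindf_join Hr1 (envle_rebindf_upd_hole Hr').
  by split; [|constructor].
- move=> mu v T1 r m' M1 U1 x _ _ IH s n M n' S Hc Hmu HR; inv Hc.
  have [? [? ?]] := IH _ _ _ _ _ ltac:(eassumption) Hmu HR.
  by rewrite /= rebindc_hole; do ! constructor.
- move=> mu R e x T y r' m' M1 U r2 e' _ _ IH Hes s n M n' S Hc Hmu HR.
  inversion Hc as [| | | | | | | | | | s0 n0 e0 x0 M1' y0 M2 v T0 n1 R0 He Hc1 |]; subst.
  have [Hr' [? ?]] := IH _ _ _ _ _ Hc1 Hmu HR.
  have [? ?] := eslice_rebind_sound Hes He (vle_inl (vle_rebindf_upd_at Hr')).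
  split; first exact: envle_rebindf_join (envle_rebindf_upd_hole Hr') _.
  by rewrite /= rebindc_hole; do ! constructor.
- move=> mu R e x y T r' m' M2 U r2 e' _ _ IH Hes s n M n' S Hc Hmu HR.
  inversion Hc as [| | | | | | | | | | | s0 n0 e0 x0 M1 y0 M2' v T0 n1 R0 He Hc1]; subst.
  have [Hr' [? ?]] := IH _ _ _ _ _ Hc1 Hmu HR.
  have [? ?] := eslice_rebind_sound Hes He (vle_inr (vle_rebindf_upd_at Hr')).
  split; first exact: envle_rebindf_join (envle_rebindf_upd_hole Hr') _.
  by rewrite /= rebindc_hole; do ! constructor.
- move=> mu R e1 e2 f x T r' m' M' U r2 e2' r1 e1' _ _ IH Hes2 Hes1 s n M n' S Hc Hmu HR.
  inversion Hc as [| s0 n0 e10 e20 r0 f0 x0 M0 v2 T0 n1 R0 He1 He2 Hc1 | | | | | | | | | |];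
    subst.
  have [Hr' [? HM']] := IH _ _ _ _ _ Hc1 Hmu HR.
  have [? ?] := eslice_rebind_sound Hes2 He2 (vle_rebindf_upd_at Hr').
  have [? ?] := eslice_rebind_sound Hes1 He1 (vle_rebindv_fun_slice Hr' HM').
  by split; [apply: envle_rebindf_join | do ! constructor].
- move=> mu v e r e' _ Hes s n M n' S Hc Hmu HR; inv Hc; case: HR => _ Hv.
  by have [? ?] := eslice_rebind_sound Hes ltac:(eassumption) Hv; do ! constructor.
- move=> mu R T1 x T2 r' m' M2 U2 r2 m'' M1 U1 _ _ IH2 _ IH1 s n M n' S Hc Hmu HR.
  inversion Hc as [| | | | | | | | s0 n0 M1' x0 M2' T10 T20 n1 v n2 R0 Hc1 Hc2 | | |]; subst.
  have [Hr' [Hm' HM2]] := IH2 _ _ _ _ _ Hc2 Hmu HR.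
  have [Hr1 [Hm'' HM1]] := IH1 _ _ _ _ _ Hc1 Hm' (conj erefl (vle_rebindf_upd_at Hr')).
  split; first exact: envle_rebindf_join (envle_rebindf_upd_hole Hr') Hr1.
  by split; [|constructor].
- move=> mu v T1 r m' M1 U1 x _ _ IH s n M n' S Hc Hmu HR; inv Hc.
  have [? [? ?]] := IH _ _ _ _ _ ltac:(eassumption) Hmu HR.
  by rewrite /= rebindc_hole; do ! constructor.
- move=> mu v l e r e' _ Hes s n M n' S Hc Hmu HR; inv Hc.
  have Hl := vle_rebindf_upd_at Hmu.
  have [? ?] := eslice_rebind_sound Hes ltac:(eassumption) Hl.
  by split=> //; split; [apply: envle_rebindf_upd_hole Hmu | constructor].
- move=> mu v l e1 e2 r2 e2' r1 e1' _ Hes2 Hes1 s n M n' S Hc Hmu HR; inv Hc.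
  have [? ?] := eslice_rebind_sound Hes2 ltac:(eassumption) (vle_rebindf_upd_at Hmu).
  have [? ?] := eslice_rebind_sound Hes1 ltac:(eassumption) (vle_loc l).
  split; first exact: envle_rebindf_join.
  by split; [apply: envle_rebindf_upd_hole Hmu | constructor].
- move=> mu v l e r e' _ Hes s n M n' S Hc Hmu HR; inv Hc; case: HR => _ Hv.
  have [? ?] := eslice_rebind_sound Hes ltac:(eassumption) (vle_loc l).
  split=> //; split; last by constructor.
  by rewrite rebindf_deref //; apply: stjoin_lub Hmu (stle_upd_store_hole Hv).
Qed.

(** * Backward slicing preserves joins *)

Lemma stle_rebindf_join n mu mu' mu'' :
  stle (rebindf n mu) n -> stle (rebindf n mu') n ->
  rebindf n mu'' = stjoin (rebindf n mu) (rebindf n mu') -> stle (rebindf n mu'') n.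
Proof. by move=> H H' ->; apply: stjoin_lub. Qed.

Lemma rle_rebindr_join S R R' R'' :
  rle (rebindr S R) S -> rle (rebindr S R') S ->
  rebindr S R'' = rjoin (rebindr S R) (rebindr S R') -> rle (rebindr S R'') S.
Proof.
case: S R R' R'' => [kS vS] [k v] [k' v'] [k'' v''] /= [-> H] [_ H'] [-> ->].
by split; last apply: vjoin_lub.
Qed.

Lemma rebindr_upd_at s x v k r r' r'' :
  rebindf (upd s x v) r'' = envjoin (rebindf (upd s x v) r) (rebindf (upd s x v) r') ->
  rebindr (Res k v) (Res k (r'' x)) =
  rjoin (rebindr (Res k v) (Res k (r x))) (rebindr (Res k v) (Res k (r' x))).
Proof. by move=> E; rewrite /= -!(rebindf_upd_at s _ x v) E. Qed.

Lemma rle_rebindr_upd_at s x v k r :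
  envle (rebindf (upd s x v) r) (upd s x v) -> rle (rebindr (Res k v) (Res k (r x))) (Res k v).
Proof. by move=> Hr; split; last exact: vle_rebindf_upd_at Hr. Qed.

Lemma rebindf_join_upd_hole s x v a b :
  envle (rebindf s a) s -> envle (rebindf (upd s x v) b) (upd s x v) ->
  rebindf s (envjoin a (upd b x VHole)) =
  envjoin (rebindf s a) (upd (rebindf (upd s x v) b) x VHole).
Proof.
by move=> Ha Hb; rewrite rebindf_join ?(rebindf_upd_hole _ _ _ v) //; exact: (envle_upd_hole Hb).
Qed.

Lemma rebindf_upd_hole_join s x v a b :
  envle (rebindf s a) s -> envle (rebindf (upd s x v) b) (upd s x v) ->
  rebindf s (envjoin (upd b x VHole) a) =
  envjoin (upd (rebindf (upd s x v) b) x VHole) (rebindf s a).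
Proof.
by move=> Ha Hb; rewrite rebindf_join ?(rebindf_upd_hole _ _ _ v) //; exact: (envle_upd_hole Hb).
Qed.

Lemma rebindf_upd_hole_stjoin n l v mu mu' mu'' :
  rebindf (upd n l v) mu'' = stjoin (rebindf (upd n l v) mu) (rebindf (upd n l v) mu') ->
  rebindf n (upd mu'' l VHole) = stjoin (rebindf n (upd mu l VHole)) (rebindf n (upd mu' l VHole)).
Proof. by move=> Em; rewrite !(rebindf_upd_hole n _ l v) Em upd_hole_stjoin. Qed.

Lemma rebindv_stjoin_at n l v mu mu' mu'' :
  rebindf (upd n l v) mu'' = stjoin (rebindf (upd n l v) mu) (rebindf (upd n l v) mu') ->
  rebindv v (mu'' l) = vjoin (rebindv v (mu l)) (rebindv v (mu' l)).
Proof. by move=> Em; rewrite -!(rebindf_upd_at n _ l v) Em. Qed.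

Lemma cslice_holeP mu R T r m N U :
  cslice mu R T r m N U -> bhole_applies mu R T ->
  exists k, [/\ R = Res k VHole, r = env_hole, m = mu, N = CHole & U = THole k (writes T)].
Proof. by case=> * //; eexists; split. Qed.

Lemma bhole_applies_rebind_join n' S T mu R mu' R' mu'' R'' :
  rle (rebindr S R) S -> rle (rebindr S R') S ->
  rebindf n' mu'' = stjoin (rebindf n' mu) (rebindf n' mu') ->
  rebindr S R'' = rjoin (rebindr S R) (rebindr S R') ->
  bhole_applies mu'' R'' T <-> bhole_applies mu R T /\ bhole_applies mu' R' T.
Proof.
case: S R R' R'' => [kS vS] [k v] [k' v'] [k'' v''] /= [Ek _] [Ek' _] Em [Ek'' Ev].
subst.
have Em' L : erase mu'' L = mu'' <-> erase mu L = mu /\ erase mu' L = mu'.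
  by rewrite -(erase_rebindf n') Em erased_stjoin !erase_rebindf.
split=> [[[k0 [_ E]] /Em' [He He']] | [[[k0 [_ E]] He] [[k0' [_ E']] He']]].
- move: Ev; rewrite E rebindv_hole.
  move=> /esym /vjoin_eq_hole [/rebindv_eq_hole -> /rebindv_eq_hole ->].
  by split; split=> //; exists kS.
- move: Ev; rewrite E E' !rebindv_hole /= => /rebindv_eq_hole ->.
  by split; [exists kS | apply/Em'].
Qed.

Lemma rebindt_nonhole mu R T r m N U k L :
  ~ bhole_applies mu R T -> cslice mu R T r m N U -> tjoin (rebindt T U) (THole k L) = rebindt T U.
Proof. by move=> Hb H; inv H => //; exfalso; apply: Hb; split; [eexists|]. Qed.

Section SlicesJoin.

Variables (T : itrace) (s : env) (n : store) (M : icomp) (n' : store) (S : result).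

(* The inputs of the three slices are joined only up to rebinding because, in
   the induction, the inputs of the slices along a subtrace are outputs of
   other slices. *)
Definition slices_join : Prop :=
  forall mu R mu' R' mu'' R'' r m N U r' m' N' U' r'' m'' N'' U'',
  stle (rebindf n' mu) n' -> rle (rebindr S R) S ->
  stle (rebindf n' mu') n' -> rle (rebindr S R') S ->
  rebindf n' mu'' = stjoin (rebindf n' mu) (rebindf n' mu') ->
  rebindr S R'' = rjoin (rebindr S R) (rebindr S R') ->
  cslice mu R T r m N U -> cslice mu' R' T r' m' N' U' ->
  cslice mu'' R'' T r'' m'' N'' U'' ->
  [/\ rebindf s r'' = envjoin (rebindf s r) (rebindf s r'),
      rebindf n m'' = stjoin (rebindf n m) (rebindf n m'),
      rebindc M N'' = cjoin (rebindc M N) (rebindc M N') &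
      rebindt T U'' = tjoin (rebindt T U) (rebindt T U')].

Definition nonhole_slices_join : Prop :=
  forall mu R mu' R' mu'' R'' r m N U r' m' N' U' r'' m'' N'' U'',
  stle (rebindf n' mu) n' -> rle (rebindr S R) S ->
  stle (rebindf n' mu') n' -> rle (rebindr S R') S ->
  rebindf n' mu'' = stjoin (rebindf n' mu) (rebindf n' mu') ->
  rebindr S R'' = rjoin (rebindr S R) (rebindr S R') ->
  ~ bhole_applies mu R T -> ~ bhole_applies mu' R' T -> ~ bhole_applies mu'' R'' T ->
  cslice mu R T r m N U -> cslice mu' R' T r' m' N' U' ->
  cslice mu'' R'' T r'' m'' N'' U'' ->
  [/\ rebindf s r'' = envjoin (rebindf s r) (rebindf s r'),
      rebindf n m'' = stjoin (rebindf n m) (rebindf n m'),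
      rebindc M N'' = cjoin (rebindc M N) (rebindc M N') &
      rebindt T U'' = tjoin (rebindt T U) (rebindt T U')].

Definition framed_slices_join : Prop :=
  forall mu k mu' R' mu'' R'' r' m' N' U' r'' m'' N'' U'',
  stle (rebindf n' mu) n' -> erase mu (writes T) = mu -> rle (rebindr S (Res k VHole)) S ->
  stle (rebindf n' mu') n' -> rle (rebindr S R') S ->
  rebindf n' mu'' = stjoin (rebindf n' mu) (rebindf n' mu') ->
  rebindr S R'' = rebindr S R' ->
  ~ bhole_applies mu' R' T -> ~ bhole_applies mu'' R'' T ->
  cslice mu' R' T r' m' N' U' -> cslice mu'' R'' T r'' m'' N'' U'' ->
  [/\ rebindf s r'' = rebindf s r',
      rebindf n m'' = stjoin (rebindf n mu) (rebindf n m'),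
      rebindc M N'' = rebindc M N' &
      rebindt T U'' = rebindt T U'].

End SlicesJoin.

Lemma cslice_bhole_dec mu R T r m N U :
  cslice mu R T r m N U -> bhole_applies mu R T \/ ~ bhole_applies mu R T.
Proof. by case=> *; [left; split; [eexists|] | right..]. Qed.

Lemma rjoin_rebindr_hole_l S k R :
  rle (rebindr S (Res k VHole)) S -> rle (rebindr S R) S ->
  rjoin (rebindr S (Res k VHole)) (rebindr S R) = rebindr S R.
Proof. by case: S R => [kS vS] [k' v] /= [-> _] [-> _]; rewrite rebindv_hole. Qed.

Lemma rjoin_rebindr_hole_r S R k :
  rjoin (rebindr S R) (rebindr S (Res k VHole)) = rebindr S R.
Proof. by case: S R => [kS vS] [k' v] /=; rewrite rebindv_hole vjoin_hole. Qed.

Ltac hole_contra :=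
  match goal with
  | B : ~ bhole_applies ?m (Res ?k VHole) ?T, E : erase ?m (writes ?T) = ?m |- _ =>
      by case: B; split; [exists k | exact: E]
  end.

Lemma slices_join_of_cases T s n M n' S :
  ceval T s n M n' S -> nonhole_slices_join T s n M n' S -> framed_slices_join T s n M n' S ->
  slices_join T s n M n' S.
Proof.
move=> Hc Hnonhole Hframed mu R mu' R' mu'' R'' r m N U r' m' N' U' r'' m'' N'' U''
  Hmu HR Hmu' HR' Em ER H H' H''.
have Hbh := bhole_applies_rebind_join T HR HR' Em ER.
case: (cslice_bhole_dec H) => B; case: (cslice_bhole_dec H') => B'.
- have [k [? ? ? ? ?]] := cslice_holeP H B.
  have [k' [? ? ? ? ?]] := cslice_holeP H' B'.
  have B'' := proj2 Hbh (conj B B').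
  have [k'' [? ? ? ? ?]] := cslice_holeP H'' B''; subst.
  case: B B' B'' => _ He [_ He'] [_ He'']; rewrite !rebindf_hole !rebindc_hole !rebindt_hole.
  rewrite (rebindf_unwritten Hc He) (rebindf_unwritten Hc He') (rebindf_unwritten Hc He'') Em.
  split=> //; case: S HR HR' ER {Hbh Hframed Hnonhole Hc} => [kS vS] /= [-> _] [-> _].
  by case=> ->.
- have [k [? ? ? ? ?]] := cslice_holeP H B; subst.
  rewrite !rebindf_hole rebindc_hole rebindt_hole rjoin_rebindr_hole_l // in ER *.
  by have [-> -> -> ->] := Hframed mu k mu' R' mu'' R'' r' m' N' U' r'' m'' N'' U''
    Hmu (proj2 B) HR Hmu' HR' Em ER B' (fun B'' => B' (proj2 (proj1 Hbh B''))) H' H''.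
- have [k' [? ? ? ? ?]] := cslice_holeP H' B'; subst.
  rewrite rebindf_hole envjoin_hole rebindc_hole cjoin_hole rebindt_hole.
  rewrite (rebindt_nonhole _ _ B H) rjoin_rebindr_hole_r (stjoinC Hmu Hmu') in ER Em *.
  have [-> -> -> ->] := Hframed mu' k' mu R mu'' R'' r m N U r'' m'' N'' U''
    Hmu' (proj2 B') HR' Hmu HR Em ER B (fun B'' => B (proj1 (proj1 Hbh B''))) H H''.
  have [_ [Hm _]] := cslice_sound H Hc Hmu HR.
  by rewrite (stjoinC (stle_rebindf_unwritten Hc (proj2 B') Hmu') Hm).
- apply: (Hnonhole mu R mu' R' mu'' R'') => // B''.
  exact: B (proj1 (proj1 Hbh B'')).
Qed.

Lemma slices_join_ret s n e v :
  eeval s e v -> slices_join (TRet e) s n (CRet e) n (Res Val v).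
Proof.
move=> He; apply: slices_join_of_cases; first exact: cv_ret.
- move=> mu R mu' R' mu'' R'' r m N U r' m' N' U' r'' m'' N'' U''
    Hmu HR Hmu' HR' Em ER B B' B'' H H' H''.
  inversion H as [ | ? ? ? ra ea _ Ha | | | | | | | | | | |]; subst; first by hole_contra.
  inversion H' as [ | ? ? ? rb eb _ Hb | | | | | | | | | | |]; subst; first by hole_contra.
  inversion H'' as [ | ? ? ? rc ec _ Hc | | | | | | | | | | |]; subst; first by hole_contra.
  case: HR HR' ER => _ Wa [_ Wb] [Ev].
  by have [-> /= ->] := eslice_rebind_join Ha Hb Hc He Wa Wb Ev.
- move=> mu k mu' R' mu'' R'' r' m' N' U' r'' m'' N'' U''
    Hmu Hw HR Hmu' HR' Em ER B' B'' H' H''.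
  inversion H' as [ | ? ? ? rb eb _ Hb | | | | | | | | | | |]; subst; first by hole_contra.
  inversion H'' as [ | ? ? ? rc ec _ Hc | | | | | | | | | | |]; subst; first by hole_contra.
  case: HR' ER => _ Wb [Ev].
  by have [-> /= ->] := eslice_rebind_det Hb Hc He Wb Ev.
Qed.

Lemma slices_join_raise s n e v :
  eeval s e v -> slices_join (TRaise e) s n (CRaise e) n (Res Exn v).
Proof.
move=> He; apply: slices_join_of_cases; first exact: cv_raise.
- move=> mu R mu' R' mu'' R'' r m N U r' m' N' U' r'' m'' N'' U''
    Hmu HR Hmu' HR' Em ER B B' B'' H H' H''.
  inversion H as [ | | | | | | | ? ? ? ra ea _ Ha | | | | |]; subst; first by hole_contra.
  inversion H' as [ | | | | | | | ? ? ? rb eb _ Hb | | | | |]; subst; first by hole_contra.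
  inversion H'' as [ | | | | | | | ? ? ? rc ec _ Hc | | | | |]; subst; first by hole_contra.
  case: HR HR' ER => _ Wa [_ Wb] [Ev].
  by have [-> /= ->] := eslice_rebind_join Ha Hb Hc He Wa Wb Ev.
- move=> mu k mu' R' mu'' R'' r' m' N' U' r'' m'' N'' U''
    Hmu Hw HR Hmu' HR' Em ER B' B'' H' H''.
  inversion H' as [ | | | | | | | ? ? ? rb eb _ Hb | | | | |]; subst; first by hole_contra.
  inversion H'' as [ | | | | | | | ? ? ? rc ec _ Hc | | | | |]; subst; first by hole_contra.
  case: HR' ER => _ Wb [Ev].
  by have [-> /= ->] := eslice_rebind_det Hb Hc He Wb Ev.
Qed.

Lemma slices_join_ref s n e v l :
  eeval s e v -> ~ in_dom n l ->
  slices_join (TRef l e) s n (CRef e) (upd n l v) (Res Val (VLoc l)).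
Proof.
move=> He Hd; apply: slices_join_of_cases; first exact: cv_ref.
- move=> mu R mu' R' mu'' R'' r m N U r' m' N' U' r'' m'' N'' U''
    Hmu HR Hmu' HR' Em ER B B' B'' H H' H''.
  inversion H as [ | | | | | | | | | | ? ? ? ? ra ea _ Ha | |]; subst; first by hole_contra.
  inversion H' as [ | | | | | | | | | | ? ? ? ? rb eb _ Hb | |]; subst; first by hole_contra.
  inversion H'' as [ | | | | | | | | | | ? ? ? ? rc ec _ Hc | |]; subst; first by hole_contra.
  have [Er Ee] := eslice_rebind_join Ha Hb Hc He
    (vle_rebindf_upd_at Hmu) (vle_rebindf_upd_at Hmu') (rebindv_stjoin_at Em).
  by split=> //=; rewrite ?Ee // (rebindf_upd_hole_stjoin Em).
- move=> mu k mu' R' mu'' R'' r' m' N' U' r'' m'' N'' U''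
    Hmu Hw HR Hmu' HR' Em ER B' B'' H' H''.
  inversion H' as [ | | | | | | | | | | ? ? ? ? rb eb _ Hb | |]; subst; first by hole_contra.
  inversion H'' as [ | | | | | | | | | | ? ? ? ? rc ec _ Hc | |]; subst; first by hole_contra.
  have El : mu l = VHole by apply: erased_at Hw _; rewrite /= fset11.
  have Ev := rebindv_stjoin_at Em; rewrite El rebindv_hole /= in Ev.
  have [Er Ee] := eslice_rebind_det Hb Hc He (vle_rebindf_upd_at Hmu') Ev.
  by split=> //=; rewrite ?Ee // (rebindf_upd_hole_stjoin Em) (upd_same El).
Qed.

Section Assignment.

Variables (s : env) (n : store) (e1 e2 : iexpr) (l : loc) (v : ivalue).
Hypotheses (He1 : eeval s e1 (VLoc l)) (He2 : eeval s e2 v).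

Lemma nonhole_slices_join_assign :
  nonhole_slices_join (TAssign l e1 e2) s n (CAssign e1 e2) (upd n l v) (Res Val VUnit).
Proof.
move=> mu R mu' R' mu'' R'' r m N U r' m' N' U' r'' m'' N'' U''
  Hmu HR Hmu' HR' Em ER B B' B'' H H' H''.
inversion H as [ | | | | | | | | | | | ? ? ? ? ? r2a e2a r1a e1a _ H2a H1a |];
  subst; first by hole_contra.
inversion H' as [ | | | | | | | | | | | ? ? ? ? ? r2b e2b r1b e1b _ H2b H1b |];
  subst; first by hole_contra.
inversion H'' as [ | | | | | | | | | | | ? ? ? ? ? r2c e2c r1c e1c _ H2c H1c |];
  subst; first by hole_contra.
have [Wa Wb] := (vle_rebindf_upd_at Hmu, vle_rebindf_upd_at Hmu').
have [Er2 Ee2] := eslice_rebind_join H2a H2b H2c He2 Wa Wb (rebindv_stjoin_at Em).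
have [Er1 Ee1] := eslice_rebind_join H1a H1b H1c He1 (vle_loc l) (vle_loc l) erefl.
have [R2a _] := eslice_rebind_sound H2a He2 Wa.
have [R2b _] := eslice_rebind_sound H2b He2 Wb.
have [R1a _] := eslice_rebind_sound H1a He1 (vle_loc l).
have [R1b _] := eslice_rebind_sound H1b He1 (vle_loc l).
have Wc : vle (rebindv v (mu'' l)) v by rewrite (rebindv_stjoin_at Em); apply: vjoin_lub.
have [R2c _] := eslice_rebind_sound H2c He2 Wc.
have [R1c _] := eslice_rebind_sound H1c He1 (vle_loc l).
split=> //=; rewrite ?Ee1 ?Ee2 // ?(rebindf_upd_hole_stjoin Em) //.
by rewrite !rebindf_join // Er1 Er2 (envjoinACA (s := s)).
Qed.

Lemma framed_slices_join_assign :
  framed_slices_join (TAssign l e1 e2) s n (CAssign e1 e2) (upd n l v) (Res Val VUnit).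
Proof.
move=> mu k mu' R' mu'' R'' r' m' N' U' r'' m'' N'' U''
  Hmu Hw HR Hmu' HR' Em ER B' B'' H' H''.
inversion H' as [ | | | | | | | | | | | ? ? ? ? ? r2b e2b r1b e1b _ H2b H1b |];
  subst; first by hole_contra.
inversion H'' as [ | | | | | | | | | | | ? ? ? ? ? r2c e2c r1c e1c _ H2c H1c |];
  subst; first by hole_contra.
have El : mu l = VHole by apply: erased_at Hw _; rewrite /= fset11.
have Ev := rebindv_stjoin_at Em; rewrite El rebindv_hole /= in Ev.
have Wb := vle_rebindf_upd_at Hmu'.
have [Er2 Ee2] := eslice_rebind_det H2b H2c He2 Wb Ev.
have [Er1 Ee1] := eslice_rebind_det H1b H1c He1 (vle_loc l) erefl.
have [R2b _] := eslice_rebind_sound H2b He2 Wb.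
have [R1b _] := eslice_rebind_sound H1b He1 (vle_loc l).
have Wc : vle (rebindv v (mu'' l)) v by rewrite Ev.
have [R2c _] := eslice_rebind_sound H2c He2 Wc.
have [R1c _] := eslice_rebind_sound H1c He1 (vle_loc l).
split=> //=; rewrite ?Ee1 ?Ee2 // ?(rebindf_upd_hole_stjoin Em) ?(upd_same El) //.
by rewrite !rebindf_join // Er1 Er2.
Qed.

Lemma slices_join_assign :
  slices_join (TAssign l e1 e2) s n (CAssign e1 e2) (upd n l v) (Res Val VUnit).
Proof.
exact: slices_join_of_cases (cv_assign _ He1 He2)
  nonhole_slices_join_assign framed_slices_join_assign.
Qed.

End Assignment.

Lemma slices_join_deref s n e l :
  eeval s e (VLoc l) -> in_dom n l ->
  slices_join (TDeref l e) s n (CDeref e) n (Res Val (n l)).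
Proof.
move=> He Hd; apply: slices_join_of_cases; first exact: cv_deref.
- move=> mu R mu' R' mu'' R'' r m N U r' m' N' U' r'' m'' N'' U''
    Hmu HR Hmu' HR' Em ER B B' B'' H H' H''.
  inversion H as [ | | | | | | | | | | | | ? ? ? ? ra ea _ Ha]; subst; first by hole_contra.
  inversion H' as [ | | | | | | | | | | | | ? ? ? ? rb eb _ Hb]; subst; first by hole_contra.
  inversion H'' as [ | | | | | | | | | | | | ? ? ? ? rc ec _ Hc]; subst; first by hole_contra.
  have [Er Ee] := eslice_rebind_join Ha Hb Hc He (vle_loc l) (vle_loc l) erefl.
  case: HR HR' ER => _ Wa [_ Wb] [Ev].
  have Wc : vle (rebindv (n l) v1) (n l) by rewrite Ev; apply: vjoin_lub.
  have Hmu'' := stle_rebindf_join Hmu Hmu' Em.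
  split=> //=; rewrite ?Ee // !rebindf_deref // Em Ev upd_store_hole_join.
  by rewrite (stjoinACA (n := n)) //; apply: stle_upd_store_hole.
- move=> mu k mu' R' mu'' R'' r' m' N' U' r'' m'' N'' U''
    Hmu Hw HR Hmu' HR' Em ER B' B'' H' H''.
  inversion H' as [ | | | | | | | | | | | | ? ? ? ? rb eb _ Hb]; subst; first by hole_contra.
  inversion H'' as [ | | | | | | | | | | | | ? ? ? ? rc ec _ Hc]; subst; first by hole_contra.
  have [Er Ee] := eslice_rebind_det Hb Hc He (vle_loc l) erefl.
  case: HR' ER => _ Wb [Ev].
  have Hmu'' := stle_rebindf_join Hmu Hmu' Em.
  split=> //=; rewrite ?Ee // !rebindf_deref ?Ev // Em.
  by rewrite (stjoinA (n := n)) //; apply: stle_upd_store_hole.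
Qed.

Section Sequencing.

Variables (k : outcome) (s : env) (n : store) (x : var) (M1 M2 : icomp) (T1 T2 : itrace).
Variables (n1 : store) (v : ivalue) (n' : store) (S : result).
Hypothesis Hc1 : ceval T1 s n M1 n1 (Res k v).
Hypothesis Hc2 : ceval T2 (upd s x v) n1 M2 n' S.
Hypothesis IH1 : slices_join T1 s n M1 n1 (Res k v).
Hypothesis IH2 : slices_join T2 (upd s x v) n1 M2 n' S.

Variables (mu mu' mu'' : store) (R R' R'' : result).
Hypotheses (Hmu : stle (rebindf n' mu) n') (HR : rle (rebindr S R) S).
Hypotheses (Hmu' : stle (rebindf n' mu') n') (HR' : rle (rebindr S R') S).
Hypothesis Em : rebindf n' mu'' = stjoin (rebindf n' mu) (rebindf n' mu').
Hypothesis ER : rebindr S R'' = rjoin (rebindr S R) (rebindr S R').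

Variables (ra rb rc r1a r1b r1c : env) (ma mb mc m1a m1b m1c : store).
Variables (M2a M2b M2c M1a M1b M1c : icomp) (U2a U2b U2c U1a U1b U1c : itrace).
Hypotheses (Ha2 : cslice mu R T2 ra ma M2a U2a).
Hypotheses (Ha1 : cslice ma (Res k (ra x)) T1 r1a m1a M1a U1a).
Hypotheses (Hb2 : cslice mu' R' T2 rb mb M2b U2b).
Hypotheses (Hb1 : cslice mb (Res k (rb x)) T1 r1b m1b M1b U1b).
Hypotheses (Hc2' : cslice mu'' R'' T2 rc mc M2c U2c).
Hypotheses (Hc1' : cslice mc (Res k (rc x)) T1 r1c m1c M1c U1c).

(* Rules B-Let and B-TryFail combine the two environments in opposite orders. *)
Lemma sequenced_slices_join :
  [/\ rebindf s (envjoin r1c (upd rc x VHole)) =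
        envjoin (rebindf s (envjoin r1a (upd ra x VHole)))
                (rebindf s (envjoin r1b (upd rb x VHole))),
      rebindf s (envjoin (upd rc x VHole) r1c) =
        envjoin (rebindf s (envjoin (upd ra x VHole) r1a))
                (rebindf s (envjoin (upd rb x VHole) r1b)),
      rebindf n m1c = stjoin (rebindf n m1a) (rebindf n m1b),
      rebindc M1 M1c = cjoin (rebindc M1 M1a) (rebindc M1 M1b) /\
        rebindc M2 M2c = cjoin (rebindc M2 M2a) (rebindc M2 M2b) &
      rebindt T1 U1c = tjoin (rebindt T1 U1a) (rebindt T1 U1b) /\
        rebindt T2 U2c = tjoin (rebindt T2 U2a) (rebindt T2 U2b)].
Proof.
have Hmu'' := stle_rebindf_join Hmu Hmu' Em; have HR'' := rle_rebindr_join HR HR' ER.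
have [Ra [Ma _]] := cslice_sound Ha2 Hc2 Hmu HR.
have [Rb [Mb _]] := cslice_sound Hb2 Hc2 Hmu' HR'.
have [Rc [Mc _]] := cslice_sound Hc2' Hc2 Hmu'' HR''.
have [Er2 Em2 EM2 EU2] := IH2 Hmu HR Hmu' HR' Em ER Ha2 Hb2 Hc2'.
have [Va Vb Vc] :=
  And3 (rle_rebindr_upd_at k Ra) (rle_rebindr_upd_at k Rb) (rle_rebindr_upd_at k Rc).
have [Er1 Em1 EM1 EU1] := IH1 Ma Va Mb Vb Em2 (rebindr_upd_at _ Er2) Ha1 Hb1 Hc1'.
have [R1a _] := cslice_sound Ha1 Hc1 Ma Va.
have [R1b _] := cslice_sound Hb1 Hc1 Mb Vb.
have [R1c _] := cslice_sound Hc1' Hc1 Mc Vc.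
have Ua := envle_upd_hole Ra; have Ub := envle_upd_hole Rb.
split=> //.
- rewrite !(rebindf_join_upd_hole (v := v)) // Er1 Er2 upd_hole_envjoin.
  by rewrite (envjoinACA (s := s)).
- rewrite !(rebindf_upd_hole_join (v := v)) // Er1 Er2 upd_hole_envjoin.
  by rewrite (envjoinACA (s := s)).
Qed.

End Sequencing.

Section LetSucceed.

Variables (s : env) (n : store) (x : var) (M1 M2 : icomp) (T1 T2 : itrace).
Variables (n1 : store) (v : ivalue) (n' : store) (S : result).
Hypotheses (Hc1 : ceval T1 s n M1 n1 (Res Val v)) (Hc2 : ceval T2 (upd s x v) n1 M2 n' S).
Hypothesis IH1 : slices_join T1 s n M1 n1 (Res Val v).
Hypothesis IH2 : slices_join T2 (upd s x v) n1 M2 n' S.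

Lemma nonhole_slices_join_letS :
  nonhole_slices_join (TLetS T1 x T2) s n (CLet x M1 M2) n' S.
Proof.
move=> mu R mu' R' mu'' R'' r m N U r' m' N' U' r'' m'' N'' U''
  Hmu HR Hmu' HR' Em ER B B' B'' H H' H''.
inversion H as [ | | ? ? ? ? ? ra ma M2a U2a r1a m1a M1a U1a _ Ha2 Ha1 | | | | | | | | | |];
  subst; first by hole_contra.
inversion H' as [ | | ? ? ? ? ? rb mb M2b U2b r1b m1b M1b U1b _ Hb2 Hb1 | | | | | | | | | |];
  subst; first by hole_contra.
inversion H'' as [ | | ? ? ? ? ? rc mc M2c U2c r1c m1c M1c U1c _ Hc2' Hc1' | | | | | | | | | |];
  subst; first by hole_contra.
have [Er _ Em1 [EM1 EM2] [EU1 EU2]] :=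
  sequenced_slices_join Hc1 Hc2 IH1 IH2 Hmu HR Hmu' HR' Em ER Ha2 Ha1 Hb2 Hb1 Hc2' Hc1'.
by split=> //=; rewrite ?EM1 ?EM2 ?EU1 ?EU2.
Qed.

Lemma framed_slices_join_letS :
  framed_slices_join (TLetS T1 x T2) s n (CLet x M1 M2) n' S.
Proof.
move=> mu k mu' R' mu'' R'' r' m' N' U' r'' m'' N'' U''
  Hmu He HR Hmu' HR' Em ER B' B'' H' H''.
inversion H' as [ | | ? ? ? ? ? rb mb M2b U2b r1b m1b M1b U1b _ Hb2 Hb1 | | | | | | | | | |];
  subst; first by hole_contra.
inversion H'' as [ | | ? ? ? ? ? rc mc M2c U2c r1c m1c M1c U1c _ Hc2' Hc1' | | | | | | | | | |];
  subst; first by hole_contra.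
have He2 : erase mu (writes T2) = mu by apply: erased_sub He _; apply: fsubsetUr.
have He1 : erase mu (writes T1) = mu by apply: erased_sub He _; apply: fsubsetUl.
rewrite -(rjoin_rebindr_hole_l HR HR') in ER.
have [Er _ Em1 [EM1 EM2] [EU1 EU2]] := sequenced_slices_join Hc1 Hc2 IH1 IH2
  Hmu HR Hmu' HR' Em ER (cs_hole k He2) (cs_hole Val He1) Hb2 Hb1 Hc2' Hc1'.
rewrite upd_env_hole envjoin_hole_l !rebindf_hole !rebindc_hole !rebindt_hole
  in Er EM1 EM2 EU1 EU2.
by split=> //=; rewrite ?EM1 ?EM2 ?EU1 ?EU2.
Qed.

Lemma slices_join_letS : slices_join (TLetS T1 x T2) s n (CLet x M1 M2) n' S.
Proof.
exact: slices_join_of_cases (cv_letS Hc1 Hc2)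
  nonhole_slices_join_letS framed_slices_join_letS.
Qed.

End LetSucceed.

Section TryFail.

Variables (s : env) (n : store) (x : var) (M1 M2 : icomp) (T1 T2 : itrace).
Variables (n1 : store) (v : ivalue) (n' : store) (S : result).
Hypotheses (Hc1 : ceval T1 s n M1 n1 (Res Exn v)) (Hc2 : ceval T2 (upd s x v) n1 M2 n' S).
Hypothesis IH1 : slices_join T1 s n M1 n1 (Res Exn v).
Hypothesis IH2 : slices_join T2 (upd s x v) n1 M2 n' S.

Lemma nonhole_slices_join_tryF :
  nonhole_slices_join (TTryF T1 x T2) s n (CTry M1 x M2) n' S.
Proof.
move=> mu R mu' R' mu'' R'' r m N U r' m' N' U' r'' m'' N'' U''
  Hmu HR Hmu' HR' Em ER B B' B'' H H' H''.
inversion H as [ | | | | | | | | ? ? ? ? ? ra ma M2a U2a r1a m1a M1a U1a _ Ha2 Ha1 | | | |];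
  subst; first by hole_contra.
inversion H' as [ | | | | | | | | ? ? ? ? ? rb mb M2b U2b r1b m1b M1b U1b _ Hb2 Hb1 | | | |];
  subst; first by hole_contra.
inversion H'' as [ | | | | | | | | ? ? ? ? ? rc mc M2c U2c r1c m1c M1c U1c _ Hc2' Hc1' | | | |];
  subst; first by hole_contra.
have [_ Er Em1 [EM1 EM2] [EU1 EU2]] :=
  sequenced_slices_join Hc1 Hc2 IH1 IH2 Hmu HR Hmu' HR' Em ER Ha2 Ha1 Hb2 Hb1 Hc2' Hc1'.
by split=> //=; rewrite ?EM1 ?EM2 ?EU1 ?EU2.
Qed.

Lemma framed_slices_join_tryF :
  framed_slices_join (TTryF T1 x T2) s n (CTry M1 x M2) n' S.
Proof.
move=> mu k mu' R' mu'' R'' r' m' N' U' r'' m'' N'' U''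
  Hmu He HR Hmu' HR' Em ER B' B'' H' H''.
inversion H' as [ | | | | | | | | ? ? ? ? ? rb mb M2b U2b r1b m1b M1b U1b _ Hb2 Hb1 | | | |];
  subst; first by hole_contra.
inversion H'' as [ | | | | | | | | ? ? ? ? ? rc mc M2c U2c r1c m1c M1c U1c _ Hc2' Hc1' | | | |];
  subst; first by hole_contra.
have He2 : erase mu (writes T2) = mu by apply: erased_sub He _; apply: fsubsetUr.
have He1 : erase mu (writes T1) = mu by apply: erased_sub He _; apply: fsubsetUl.
rewrite -(rjoin_rebindr_hole_l HR HR') in ER.
have [_ Er Em1 [EM1 EM2] [EU1 EU2]] := sequenced_slices_join Hc1 Hc2 IH1 IH2
  Hmu HR Hmu' HR' Em ER (cs_hole k He2) (cs_hole Exn He1) Hb2 Hb1 Hc2' Hc1'.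
rewrite upd_env_hole envjoin_hole_l !rebindf_hole !rebindc_hole !rebindt_hole
  in Er EM1 EM2 EU1 EU2.
by split=> //=; rewrite ?EM1 ?EM2 ?EU1 ?EU2.
Qed.

Lemma slices_join_tryF : slices_join (TTryF T1 x T2) s n (CTry M1 x M2) n' S.
Proof.
exact: slices_join_of_cases (cv_tryF Hc1 Hc2)
  nonhole_slices_join_tryF framed_slices_join_tryF.
Qed.

End TryFail.

Section LetFail.

Variables (s : env) (n : store) (x : var) (M1 M2 : icomp) (T1 : itrace) (n' : store) (v : ivalue).
Hypothesis Hc : ceval T1 s n M1 n' (Res Exn v).
Hypothesis IH : slices_join T1 s n M1 n' (Res Exn v).

Lemma nonhole_slices_join_letF :
  nonhole_slices_join (TLetF T1) s n (CLet x M1 M2) n' (Res Exn v).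
Proof.
move=> mu R mu' R' mu'' R'' r m N U r' m' N' U' r'' m'' N'' U''
  Hmu HR Hmu' HR' Em ER B B' B'' H H' H''.
inversion H as [ | | | ? ? ? ? ? ? ? ? _ Ha | | | | | | | | |]; subst; first by hole_contra.
inversion H' as [ | | | ? ? ? ? ? ? ? ? _ Hb | | | | | | | | |]; subst; first by hole_contra.
inversion H'' as [ | | | ? ? ? ? ? ? ? ? _ Hc' | | | | | | | | |]; subst; first by hole_contra.
have [Er Em1 EM EU] := IH Hmu HR Hmu' HR' Em ER Ha Hb Hc'.
by split=> //=; rewrite ?rebindc_hole ?EM ?EU.
Qed.

Lemma framed_slices_join_letF :
  framed_slices_join (TLetF T1) s n (CLet x M1 M2) n' (Res Exn v).
Proof.
move=> mu k mu' R' mu'' R'' r' m' N' U' r'' m'' N'' U''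
  Hmu He HR Hmu' HR' Em ER B' B'' H' H''.
inversion H' as [ | | | ? ? ? ? ? ? ? ? _ Hb | | | | | | | | |]; subst; first by hole_contra.
inversion H'' as [ | | | ? ? ? ? ? ? ? ? _ Hc' | | | | | | | | |]; subst; first by hole_contra.
rewrite -(rjoin_rebindr_hole_l HR HR') in ER.
have [Er Em1 EM EU] := IH Hmu HR Hmu' HR' Em ER (@cs_hole mu k T1 He) Hb Hc'.
rewrite !rebindf_hole !rebindc_hole !rebindt_hole in Er EM EU.
by split=> //=; rewrite ?rebindc_hole ?EM ?EU.
Qed.

Lemma slices_join_letF : slices_join (TLetF T1) s n (CLet x M1 M2) n' (Res Exn v).
Proof.
exact: slices_join_of_cases (cv_letF x M2 Hc) nonhole_slices_join_letF framed_slices_join_letF.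
Qed.

End LetFail.

Section TrySucceed.

Variables (s : env) (n : store) (x : var) (M1 M2 : icomp) (T1 : itrace) (n' : store) (v : ivalue).
Hypothesis Hc : ceval T1 s n M1 n' (Res Val v).
Hypothesis IH : slices_join T1 s n M1 n' (Res Val v).

Lemma nonhole_slices_join_tryS :
  nonhole_slices_join (TTryS T1) s n (CTry M1 x M2) n' (Res Val v).
Proof.
move=> mu R mu' R' mu'' R'' r m N U r' m' N' U' r'' m'' N'' U''
  Hmu HR Hmu' HR' Em ER B B' B'' H H' H''.
inversion H as [ | | | | | | | | | ? ? ? ? ? ? ? ? _ Ha | | |]; subst; first by hole_contra.
inversion H' as [ | | | | | | | | | ? ? ? ? ? ? ? ? _ Hb | | |]; subst; first by hole_contra.
inversion H'' as [ | | | | | | | | | ? ? ? ? ? ? ? ? _ Hc' | | |]; subst; first by hole_contra.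
have [Er Em1 EM EU] := IH Hmu HR Hmu' HR' Em ER Ha Hb Hc'.
by split=> //=; rewrite ?rebindc_hole ?EM ?EU.
Qed.

Lemma framed_slices_join_tryS :
  framed_slices_join (TTryS T1) s n (CTry M1 x M2) n' (Res Val v).
Proof.
move=> mu k mu' R' mu'' R'' r' m' N' U' r'' m'' N'' U''
  Hmu He HR Hmu' HR' Em ER B' B'' H' H''.
inversion H' as [ | | | | | | | | | ? ? ? ? ? ? ? ? _ Hb | | |]; subst; first by hole_contra.
inversion H'' as [ | | | | | | | | | ? ? ? ? ? ? ? ? _ Hc' | | |]; subst; first by hole_contra.
rewrite -(rjoin_rebindr_hole_l HR HR') in ER.
have [Er Em1 EM EU] := IH Hmu HR Hmu' HR' Em ER (@cs_hole mu k T1 He) Hb Hc'.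
rewrite !rebindf_hole !rebindc_hole !rebindt_hole in Er EM EU.
by split=> //=; rewrite ?rebindc_hole ?EM ?EU.
Qed.

Lemma slices_join_tryS : slices_join (TTryS T1) s n (CTry M1 x M2) n' (Res Val v).
Proof.
exact: slices_join_of_cases (cv_tryS x M2 Hc) nonhole_slices_join_tryS framed_slices_join_tryS.
Qed.

End TrySucceed.

Section CaseLeft.

Variables (s : env) (n : store) (e : iexpr) (x : var) (M1 : icomp) (y : var) (M2 : icomp).
Variables (v : ivalue) (T : itrace) (n' : store) (S : result).
Hypothesis He : eeval s e (VInl v).
Hypothesis Hc : ceval T (upd s x v) n M1 n' S.
Hypothesis IH : slices_join T (upd s x v) n M1 n' S.

Lemma nonhole_slices_join_caseL :
  nonhole_slices_join (TCaseL e x T y) s n (CCase e x M1 y M2) n' S.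
Proof.
move=> mu R mu' R' mu'' R'' r m N U r' m' N' U' r'' m'' N'' U''
  Hmu HR Hmu' HR' Em ER B B' B'' H H' H''.
inversion H as [ | | | | ? ? ? ? ? ? ra ma Ma Ua r2a ea _ Ha Hea | | | | | | | |];
  subst; first by hole_contra.
inversion H' as [ | | | | ? ? ? ? ? ? rb mb Mb Ub r2b eb _ Hb Heb | | | | | | | |];
  subst; first by hole_contra.
inversion H'' as [ | | | | ? ? ? ? ? ? rc mc Mc Uc r2c ec _ Hc' Hec | | | | | | | |];
  subst; first by hole_contra.
have Hmu'' := stle_rebindf_join Hmu Hmu' Em; have HR'' := rle_rebindr_join HR HR' ER.
have [Ra _] := cslice_sound Ha Hc Hmu HR.
have [Rb _] := cslice_sound Hb Hc Hmu' HR'.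
have [Rc _] := cslice_sound Hc' Hc Hmu'' HR''.
have [Er Em1 EM EU] := IH Hmu HR Hmu' HR' Em ER Ha Hb Hc'.
have [Wa Wb Wc] := And3 (vle_inl (vle_rebindf_upd_at Ra)) (vle_inl (vle_rebindf_upd_at Rb))
  (vle_inl (vle_rebindf_upd_at Rc)).
have [Er2 Ee] := eslice_rebind_join Hea Heb Hec He Wa Wb
  ltac:(by rewrite /= -!(rebindf_upd_at s _ x v) Er).
have [R2a _] := eslice_rebind_sound Hea He Wa.
have [R2b _] := eslice_rebind_sound Heb He Wb.
have [R2c _] := eslice_rebind_sound Hec He Wc.
split=> //=; rewrite ?rebindc_hole ?Ee ?EM ?EU //.
rewrite !(rebindf_upd_hole_join (v := v)) // Er Er2 upd_hole_envjoin.
by rewrite (envjoinACA (s := s)) //; apply: envle_upd_hole.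
Qed.

Lemma framed_slices_join_caseL :
  framed_slices_join (TCaseL e x T y) s n (CCase e x M1 y M2) n' S.
Proof.
move=> mu k mu' R' mu'' R'' r' m' N' U' r'' m'' N'' U''
  Hmu Hw HR Hmu' HR' Em ER B' B'' H' H''.
inversion H' as [ | | | | ? ? ? ? ? ? rb mb Mb Ub r2b eb _ Hb Heb | | | | | | | |];
  subst; first by hole_contra.
inversion H'' as [ | | | | ? ? ? ? ? ? rc mc Mc Uc r2c ec _ Hc' Hec | | | | | | | |];
  subst; first by hole_contra.
have ER' := ER; rewrite -(rjoin_rebindr_hole_l HR HR') in ER'.
have Hmu'' := stle_rebindf_join Hmu Hmu' Em; have HR'' := rle_rebindr_join HR HR' ER'.
have [Rb _] := cslice_sound Hb Hc Hmu' HR'.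
have [Rc _] := cslice_sound Hc' Hc Hmu'' HR''.
have [Er Em1 EM EU] := IH Hmu HR Hmu' HR' Em ER' (@cs_hole mu k T Hw) Hb Hc'.
rewrite !rebindf_hole !rebindc_hole !rebindt_hole in Er EM EU.
have [Wb Wc] := (vle_inl (vle_rebindf_upd_at Rb), vle_inl (vle_rebindf_upd_at Rc)).
have [Er2 Ee] := eslice_rebind_det Heb Hec He Wb
  ltac:(by rewrite /= -!(rebindf_upd_at s _ x v) Er).
have [R2b _] := eslice_rebind_sound Heb He Wb.
have [R2c _] := eslice_rebind_sound Hec He Wc.
split=> //=; rewrite ?rebindc_hole ?Ee ?EM ?EU //.
by rewrite !(rebindf_upd_hole_join (v := v)) // Er Er2.
Qed.

Lemma slices_join_caseL : slices_join (TCaseL e x T y) s n (CCase e x M1 y M2) n' S.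
Proof.
exact: slices_join_of_cases (cv_caseL y M2 He Hc)
  nonhole_slices_join_caseL framed_slices_join_caseL.
Qed.

End CaseLeft.

Section CaseRight.

Variables (s : env) (n : store) (e : iexpr) (x : var) (M1 : icomp) (y : var) (M2 : icomp).
Variables (v : ivalue) (T : itrace) (n' : store) (S : result).
Hypothesis He : eeval s e (VInr v).
Hypothesis Hc : ceval T (upd s y v) n M2 n' S.
Hypothesis IH : slices_join T (upd s y v) n M2 n' S.

Lemma nonhole_slices_join_caseR :
  nonhole_slices_join (TCaseR e x y T) s n (CCase e x M1 y M2) n' S.
Proof.
move=> mu R mu' R' mu'' R'' r m N U r' m' N' U' r'' m'' N'' U''
  Hmu HR Hmu' HR' Em ER B B' B'' H H' H''.
inversion H as [ | | | | | ? ? ? ? ? ? ra ma Ma Ua r2a ea _ Ha Hea | | | | | | |];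
  subst; first by hole_contra.
inversion H' as [ | | | | | ? ? ? ? ? ? rb mb Mb Ub r2b eb _ Hb Heb | | | | | | |];
  subst; first by hole_contra.
inversion H'' as [ | | | | | ? ? ? ? ? ? rc mc Mc Uc r2c ec _ Hc' Hec | | | | | | |];
  subst; first by hole_contra.
have Hmu'' := stle_rebindf_join Hmu Hmu' Em; have HR'' := rle_rebindr_join HR HR' ER.
have [Ra _] := cslice_sound Ha Hc Hmu HR.
have [Rb _] := cslice_sound Hb Hc Hmu' HR'.
have [Rc _] := cslice_sound Hc' Hc Hmu'' HR''.
have [Er Em1 EM EU] := IH Hmu HR Hmu' HR' Em ER Ha Hb Hc'.
have [Wa Wb Wc] := And3 (vle_inr (vle_rebindf_upd_at Ra)) (vle_inr (vle_rebindf_upd_at Rb))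
  (vle_inr (vle_rebindf_upd_at Rc)).
have [Er2 Ee] := eslice_rebind_join Hea Heb Hec He Wa Wb
  ltac:(by rewrite /= -!(rebindf_upd_at s _ y v) Er).
have [R2a _] := eslice_rebind_sound Hea He Wa.
have [R2b _] := eslice_rebind_sound Heb He Wb.
have [R2c _] := eslice_rebind_sound Hec He Wc.
split=> //=; rewrite ?rebindc_hole ?Ee ?EM ?EU //.
rewrite !(rebindf_upd_hole_join (x := y) (v := v)) // Er Er2 upd_hole_envjoin.
by rewrite (envjoinACA (s := s)) //; apply: envle_upd_hole.
Qed.

Lemma framed_slices_join_caseR :
  framed_slices_join (TCaseR e x y T) s n (CCase e x M1 y M2) n' S.
Proof.
move=> mu k mu' R' mu'' R'' r' m' N' U' r'' m'' N'' U''
  Hmu Hw HR Hmu' HR' Em ER B' B'' H' H''.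
inversion H' as [ | | | | | ? ? ? ? ? ? rb mb Mb Ub r2b eb _ Hb Heb | | | | | | |];
  subst; first by hole_contra.
inversion H'' as [ | | | | | ? ? ? ? ? ? rc mc Mc Uc r2c ec _ Hc' Hec | | | | | | |];
  subst; first by hole_contra.
have ER' := ER; rewrite -(rjoin_rebindr_hole_l HR HR') in ER'.
have Hmu'' := stle_rebindf_join Hmu Hmu' Em; have HR'' := rle_rebindr_join HR HR' ER'.
have [Rb _] := cslice_sound Hb Hc Hmu' HR'.
have [Rc _] := cslice_sound Hc' Hc Hmu'' HR''.
have [Er Em1 EM EU] := IH Hmu HR Hmu' HR' Em ER' (@cs_hole mu k T Hw) Hb Hc'.
rewrite !rebindf_hole !rebindc_hole !rebindt_hole in Er EM EU.
have [Wb Wc] := (vle_inr (vle_rebindf_upd_at Rb), vle_inr (vle_rebindf_upd_at Rc)).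
have [Er2 Ee] := eslice_rebind_det Heb Hec He Wb
  ltac:(by rewrite /= -!(rebindf_upd_at s _ y v) Er).
have [R2b _] := eslice_rebind_sound Heb He Wb.
have [R2c _] := eslice_rebind_sound Hec He Wc.
split=> //=; rewrite ?rebindc_hole ?Ee ?EM ?EU //.
by rewrite !(rebindf_upd_hole_join (x := y) (v := v)) // Er Er2.
Qed.

Lemma slices_join_caseR : slices_join (TCaseR e x y T) s n (CCase e x M1 y M2) n' S.
Proof.
exact: slices_join_of_cases (cv_caseR x M1 He Hc)
  nonhole_slices_join_caseR framed_slices_join_caseR.
Qed.

End CaseRight.

Section Application.

Variables (s : env) (n : store) (e1 e2 : iexpr) (r0 : env) (f x : var) (M : icomp).
Variables (v2 : ivalue) (T : itrace) (n' : store) (S : result).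
Let sb := upd (upd r0 f (VClo r0 f x M)) x v2.
Hypotheses (He1 : eeval s e1 (VClo r0 f x M)) (He2 : eeval s e2 v2).
Hypothesis Hc : ceval T sb n M n' S.
Hypothesis IH : slices_join T sb n M n' S.

Lemma nonhole_slices_join_app : nonhole_slices_join (TApp e1 e2 f x T) s n (CApp e1 e2) n' S.
Proof.
move=> mu R mu' R' mu'' R'' r m N U r' m' N' U' r'' m'' N'' U''
  Hmu HR Hmu' HR' Em ER B B' B'' H H' H''.
inversion H as [ | | | | | | ? ? ? ? ? ? ? ra ma Ma Ua r2a e2a r1a e1a _ Ha H2a H1a | | | | | |];
  subst; first by hole_contra.
inversion H' as [ | | | | | | ? ? ? ? ? ? ? rb mb Mb Ub r2b e2b r1b e1b _ Hb H2b H1b | | | | | |];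
  subst; first by hole_contra.
inversion H'' as [ | | | | | | ? ? ? ? ? ? ? rc mc Mc Uc r2c e2c r1c e1c _ Hc' H2c H1c | | | | | |];
  subst; first by hole_contra.
have Hmu'' := stle_rebindf_join Hmu Hmu' Em; have HR'' := rle_rebindr_join HR HR' ER.
have [Ra [_ MA]] := cslice_sound Ha Hc Hmu HR.
have [Rb [_ MB]] := cslice_sound Hb Hc Hmu' HR'.
have [Rc [_ MC]] := cslice_sound Hc' Hc Hmu'' HR''.
have [Er Em1 EM EU] := IH Hmu HR Hmu' HR' Em ER Ha Hb Hc'.
have [Wa Wb Wc] := And3 (vle_rebindf_upd_at Ra) (vle_rebindf_upd_at Rb) (vle_rebindf_upd_at Rc).
have [Er2 Ee2] := eslice_rebind_join H2a H2b H2c He2 Wa Wb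
  ltac:(by rewrite -!(rebindf_upd_at (upd r0 f (VClo r0 f x M)) _ x v2) Er).
have [Fa Fb Fc] := And3 (vle_rebindv_fun_slice Ra MA) (vle_rebindv_fun_slice Rb MB)
  (vle_rebindv_fun_slice Rc MC).
have [Er1 Ee1] := eslice_rebind_join H1a H1b H1c He1 Fa Fb
  ltac:(by rewrite !(rebindv_fun_slice (v2 := v2)) // Er EM
                   (fun_slice_join (r0 := r0) (M := M) (v2 := v2))).
have [R2a _] := eslice_rebind_sound H2a He2 Wa.
have [R2b _] := eslice_rebind_sound H2b He2 Wb.
have [R2c _] := eslice_rebind_sound H2c He2 Wc.
have [R1a _] := eslice_rebind_sound H1a He1 Fa.
have [R1b _] := eslice_rebind_sound H1b He1 Fb.
have [R1c _] := eslice_rebind_sound H1c He1 Fc.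
split=> //=; rewrite ?Ee1 ?Ee2 ?EU //.
by rewrite !rebindf_join // Er1 Er2 (envjoinACA (s := s)).
Qed.

Lemma framed_slices_join_app : framed_slices_join (TApp e1 e2 f x T) s n (CApp e1 e2) n' S.
Proof.
move=> mu k mu' R' mu'' R'' r' m' N' U' r'' m'' N'' U''
  Hmu Hw HR Hmu' HR' Em ER B' B'' H' H''.
inversion H' as [ | | | | | | ? ? ? ? ? ? ? rb mb Mb Ub r2b e2b r1b e1b _ Hb H2b H1b | | | | | |];
  subst; first by hole_contra.
inversion H'' as [ | | | | | | ? ? ? ? ? ? ? rc mc Mc Uc r2c e2c r1c e1c _ Hc' H2c H1c | | | | | |];
  subst; first by hole_contra.
have ER' := ER; rewrite -(rjoin_rebindr_hole_l HR HR') in ER'.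
have Hmu'' := stle_rebindf_join Hmu Hmu' Em; have HR'' := rle_rebindr_join HR HR' ER'.
have [Rb [_ MB]] := cslice_sound Hb Hc Hmu' HR'.
have [Rc [_ MC]] := cslice_sound Hc' Hc Hmu'' HR''.
have [Er Em1 EM EU] := IH Hmu HR Hmu' HR' Em ER' (@cs_hole mu k T Hw) Hb Hc'.
rewrite !rebindf_hole !rebindc_hole !rebindt_hole in Er EM EU.
have [Wb Wc] := (vle_rebindf_upd_at Rb, vle_rebindf_upd_at Rc).
have [Er2 Ee2] := eslice_rebind_det H2b H2c He2 Wb
  ltac:(by rewrite -!(rebindf_upd_at (upd r0 f (VClo r0 f x M)) _ x v2) Er).
have [Fb Fc] := (vle_rebindv_fun_slice Rb MB, vle_rebindv_fun_slice Rc MC).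
have [Er1 Ee1] := eslice_rebind_det H1b H1c He1 Fb
  ltac:(by rewrite !(rebindv_fun_slice (v2 := v2)) // Er EM).
have [R2b _] := eslice_rebind_sound H2b He2 Wb.
have [R2c _] := eslice_rebind_sound H2c He2 Wc.
have [R1b _] := eslice_rebind_sound H1b He1 Fb.
have [R1c _] := eslice_rebind_sound H1c He1 Fc.
split=> //=; rewrite ?Ee1 ?Ee2 ?EU //.
by rewrite !rebindf_join // Er1 Er2.
Qed.

Lemma slices_join_app : slices_join (TApp e1 e2 f x T) s n (CApp e1 e2) n' S.
Proof.
exact: slices_join_of_cases (cv_app He1 He2 Hc) nonhole_slices_join_app framed_slices_join_app.
Qed.

End Application.

Lemma ceval_slices_join T s n M n' S : ceval T s n M n' S -> slices_join T s n M n' S.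
Proof.
elim=> {T s n M n' S}.
- by move=> *; apply: slices_join_ret.
- by move=> ? ? ? ? ? ? ? ? ? ? ? ? He1 He2 Hc IH; apply: slices_join_app He1 He2 Hc IH.
- by move=> *; apply: slices_join_raise.
- by move=> *; apply: slices_join_ref.
- by move=> *; apply: slices_join_assign.
- by move=> *; apply: slices_join_deref.
- by move=> ? ? ? ? ? ? ? ? ? ? ? Hc1 IH1 Hc2 IH2; apply: slices_join_letS Hc1 Hc2 IH1 IH2.
- by move=> ? ? ? ? ? ? ? ? Hc IH; apply: slices_join_letF Hc IH.
- by move=> ? ? ? ? ? ? ? ? ? ? ? Hc1 IH1 Hc2 IH2; apply: slices_join_tryF Hc1 Hc2 IH1 IH2.
- by move=> ? ? ? ? ? ? ? ? Hc IH; apply: slices_join_tryS Hc IH.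
- by move=> ? ? ? ? ? ? ? ? ? ? ? He Hc IH; apply: slices_join_caseL He Hc IH.
- by move=> ? ? ? ? ? ? ? ? ? ? ? He Hc IH; apply: slices_join_caseR He Hc IH.
Qed.

Theorem lemma4p7 (T : itrace) (sigma : env) (nu : store) (M : icomp)
    (nu' : store) (S : result) (mu mu' : store) (R R' : result)
    (b b' b'' : env * store * icomp * itrace) :
  ceval T sigma nu M nu' S ->
  in_prefix_out nu' S (mu, R) ->
  in_prefix_out nu' S (mu', R') ->
  bwd sigma nu M T (mu, R) b ->
  bwd sigma nu M T (mu', R') b' ->
  bwd sigma nu M T (join_out (mu, R) (mu', R')) b'' ->
  b'' = join_in b b'.
Proof.
move=> Hc [/= Hmu HR] [/= Hmu' HR'].
case: b b' b'' => [[[r m] N] U] [[[r' m'] N'] U'] [[[r'' m''] N''] U''] /=.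
move=> [[Hr [Hm [HN HU]]] H] [[Hr' [Hm' [HN' HU']]] H'] [[Hr'' [Hm'' [HN'' HU'']]] H''].
have Hmu'' := stjoin_lub Hmu Hmu'; have HR'' := rle_rjoin HR HR'.
have [] := ceval_slices_join Hc (stle_rebindf_id Hmu) (rle_rebindr_id HR)
  (stle_rebindf_id Hmu') (rle_rebindr_id HR')
  ltac:(by rewrite !rebindf_id) ltac:(by rewrite !rebindr_id) H H' H''.
by rewrite !rebindf_id // !rebindc_id // !rebindt_id // => -> -> -> ->.
Qed.
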